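(* For all (well-formed, possibly open) $\lambda$-terms $t$ and $s$, $t \approx_{\mathrm{nf}} s$ if and only if there exists a natural number $n > \max(\mathrm{fv}(t)\cup\mathrm{fv}(s))$ such that $[\![\langle t, [], n\rangle_{\mathrm{ev}}]\!] \approx_H [\![\langle s, [], n\rangle_{\mathrm{ev}}]\!]$, where $H = \{c, hd, b, k, init, rec, ch\}$.
   Context: HOcore: processes $P,Q ::= a(x).P \mid \overline{a}\langle P\rangle \mid P \parallel Q \mid x \mid 0$ ($a$ channel names, $x$ process variables, $a(x).P$ binds $x$, $a(\_).P$ when $x$ is unused, $\parallel$ associative and commutative with unit $0$, $\mathrm{fn}(P)$ the free names). LTS: $\overline{a}\langle P\rangle \xrightarrow{\overline{a}\langle P\rangle} 0$; $a(x).Q \xrightarrow{a(P)} Q\{P/x\}$; if $P \xrightarrow{l} P'$ then $P\parallel Q \xrightarrow{l} P'\parallel Q$ (and symmetrically); if $P \xrightarrow{\overline{a}\langle R\rangle} P'$ and $Q \xrightarrow{a(R)} Q'$ then $P \parallel Q \xrightarrow{\tau} P'\parallel Q'$ (and symmetrically). $\Rightarrow$ is the reflexive transitive closure of $\xrightarrow{\tau}$. For a finite set $H$: $P\downarrow^H_a$ (resp. $P\downarrow^H_{\overline a}$) if $a\notin H$ and $P\xrightarrow{a(Q)}R$ (resp. $P\xrightarrow{\overline a\langle Q\rangle}R$) for some $Q,R$; $P\Downarrow^H_\mu$ if $P\Rightarrow P'\downarrow^H_\mu$. A barbed bisimulation w.r.t. $H$ is a symmetric relation $\mathcal R$ such that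 $P\mathcal RQ$ implies: $P\downarrow^H_\mu$ implies $Q\Downarrow^H_\mu$; for all $R$ with $\mathrm{fn}(R)\cap H=\emptyset$, $(P\parallel R)\mathcal R(Q\parallel R)$; if $P\xrightarrow\tau P'$ then $Q\Rightarrow Q'$ with $P'\mathcal RQ'$. $\approx_H$ is the largest barbed bisimulation w.r.t. $H$. Terms: $t,s ::= f \mid x \mid \lambda x.t \mid t\,s$ ($f$ free variables identified with natural numbers, $x$ bound variables, terms well formed; $\mathrm{fv}(t)$ the free variables). Stacks $\pi ::= t::\pi\mid[]$. KAM: $\langle t\,s, \pi\rangle \to \langle t, s :: \pi\rangle$, $\langle \lambda x.t, s::\pi\rangle \to \langle t\{s/x\}, \pi\rangle$. Relations on terms extend to stacks pointwise (equal length, elementwise related). Normal-form bisimulation: symmetric $\mathcal R$ on terms with $t\mathcal Rs$ implying (1) if $\langle t, []\rangle \to^* \langle \lambda x.t', []\rangle$ then $\langle s,[]\rangle \to^* \langle \lambda x.s', []\rangle$ for some $s'$ with $t'\{f/x\} \mathcal R s'\{f/x\}$ for a fresh $f$; (2) if $\langle t, []\rangle \to^* \langle f, \pi\rangle$ then $\langle s,[]\rangle\to^*\langle f,\pi'\rangle$ for some $\pi'$ with $\pi\mathcal R\pi'$. $\approx_{\mathrm{nf}}$ is the largest normal-form bisimulation. NFB machine configurations: $\langle t,\pi,n\rangle_{\mathrm{ev}}$ and $\langle \pi, n\rangle_{\mathrm{cont}}$ ($n\in\mathbb N$). Translation into HOcore, using channel names $c, hd, b, k, init, rec, ch$ and flag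 names $\lambda, \mathsf{enter}, \mathsf{skip}, \mathsf{done}, suc, z$ ($p$ fresh). Internal choice: $P + Q = \overline{ch}\langle P\rangle \parallel \overline{ch}\langle Q\rangle \parallel ch(x).ch(\_).x$. Numbers: $[0] = z(\_).\overline{init}\langle 0\rangle$, $[n+1] = suc(\_).[n]$. $[\![t\,s]\!] = c(p).([\![t]\!] \parallel \overline{c}\langle \overline{hd}\langle[\![s]\!]\rangle \parallel \overline{c}\langle p\rangle\rangle)$; $[\![\lambda x.t]\!] = c(p).(p \parallel \overline{b}\langle \mathit{Restart}\rangle \parallel hd(x).b(\_).[\![t]\!])$; $[\![x]\!] = x$; $[\![f]\!] = [f]$; $\mathit{Restart} = \lambda(\_).k(x).(\overline{hd}\langle x\rangle \parallel \overline{k}\langle suc(\_).x\rangle \parallel \overline{c}\langle[\![[]]\!]\rangle \parallel \overline{b}\langle 0\rangle)$; $\mathit{Rec} = init(\_).rec(x).(x \parallel \overline{rec}\langle x\rangle \parallel \mathit{Cont})$; $\mathit{Cont} = c(p).(p \parallel \overline{b}\langle \mathsf{done}(\_).0\rangle \parallel hd(x).b(\_).\mathit{Choice}(x))$; $\mathit{Choice}(P) = \mathsf{enter}(\_).c(\_).(P \parallel \overline{c}\langle[\![[]]\!]\rangle) + \mathsf{skip}(\_).\overline{init}\langle 0\rangle$; $[\![[]]\!] = b(x).x$; $[\![t::\pi]\!] = \overline{hd}\langle[\![t]\!]\rangle \parallel \overline{c}\langle[\![\pi]\!]\rangle$; $[\![\langle t,\pi,n\rangle_{\mathrm{ev}}]\!]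 = [\![t]\!] \parallel \overline{c}\langle[\![\pi]\!]\rangle \parallel \overline{k}\langle [n]\rangle \parallel \mathit{Rec} \parallel \overline{rec}\langle\mathit{Rec}\rangle$. *)

From Stdlib Require Import List Arith Relations.
Import ListNotations.

Definition name := nat.

(* a(x).P is [PIn a P], where x is the de Bruijn index 0 in P;
   a(_).P is [PIn a P] with index 0 unused. *)
Inductive proc : Type :=
| PIn  : name -> proc -> proc
| POut : name -> proc -> proc
| PPar : proc -> proc -> proc
| PVar : nat -> proc
| PNil : proc.

Fixpoint shift_from (d : nat) (P : proc) : proc :=
  match P with
  | PIn a Q => PIn a (shift_from (S d) Q)
  | POut a Q => POut a (shift_from d Q)
  | PPar Q R => PPar (shift_from d Q) (shift_from d R)
  | PVar i => if d <=? i then PVar (S i) else PVar i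
  | PNil => PNil
  end.

Fixpoint shiftn (n : nat) (P : proc) : proc :=
  match n with
  | 0 => P
  | S m => shift_from 0 (shiftn m P)
  end.

Fixpoint subst_at (d : nat) (Q : proc) (P : proc) : proc :=
  match P with
  | PIn a R => PIn a (subst_at (S d) Q R)
  | POut a R => POut a (subst_at d Q R)
  | PPar R1 R2 => PPar (subst_at d Q R1) (subst_at d Q R2)
  | PVar i =>
      match Nat.compare i d with
      | Lt => PVar i
      | Eq => shiftn d Q
      | Gt => PVar (pred i)
      end
  | PNil => PNil
  end.

(* [psubst P Q] is P{Q/x} where x is the outermost bound variable of P *)
Definition psubst (P Q : proc) : proc := subst_at 0 Q P.

Fixpoint fn (P : proc) : list name :=
  match P with
  | PIn a Q => a :: fn Q
  | POut a Q => a :: fn Q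
  | PPar Q R => fn Q ++ fn R
  | PVar _ => []
  | PNil => []
  end.

Inductive label : Type :=
| LIn  : name -> proc -> label
| LOut : name -> proc -> label
| LTau : label.

Inductive step : proc -> label -> proc -> Prop :=
| st_out : forall a P, step (POut a P) (LOut a P) PNil
| st_in : forall a Q P, step (PIn a Q) (LIn a P) (psubst Q P)
| st_parl : forall P Q l P', step P l P' -> step (PPar P Q) l (PPar P' Q)
| st_parr : forall P Q l Q', step Q l Q' -> step (PPar P Q) l (PPar P Q')
| st_coml : forall P Q a R P' Q',
    step P (LOut a R) P' -> step Q (LIn a R) Q' -> step (PPar P Q) LTau (PPar P' Q')
| st_comr : forall P Q a R P' Q',
    step P (LIn a R) P' -> step Q (LOut a R) Q' -> step (PPar P Q) LTau (PPar P' Q').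

Definition tau_step (P Q : proc) : Prop := step P LTau Q.
Definition tau_star : proc -> proc -> Prop := clos_refl_trans proc tau_step.

Inductive barb : Type := BIn : name -> barb | BOut : name -> barb.

Definition sbarb (H : list name) (P : proc) (mu : barb) : Prop :=
  match mu with
  | BIn a => ~ In a H /\ exists Q R, step P (LIn a Q) R
  | BOut a => ~ In a H /\ exists Q R, step P (LOut a Q) R
  end.

Definition wbarb (H : list name) (P : proc) (mu : barb) : Prop :=
  exists P', tau_star P P' /\ sbarb H P' mu.

Definition barbed_bisimulation (H : list name) (Rel : proc -> proc -> Prop) : Prop :=
  (forall P Q, Rel P Q -> Rel Q P) /\
  (forall P Q, Rel P Q ->
     (forall mu, sbarb H P mu -> wbarb H Q mu) /\
     (forall R, (forall a, In a (fn R) -> ~ In a H) -> Rel (PPar P R) (PPar Q R)) /\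
     (forall P', tau_step P P' -> exists Q', tau_star Q Q' /\ Rel P' Q')).

Definition barbed_bisimilar (H : list name) (P Q : proc) : Prop :=
  exists Rel, barbed_bisimulation H Rel /\ Rel P Q.

(* free variables are natural numbers; bound variables are de Bruijn
   indices *)
Inductive term : Type :=
| FVar : nat -> term
| BVar : nat -> term
| Lam : term -> term
| App : term -> term -> term.

Fixpoint wf_at (k : nat) (t : term) : Prop :=
  match t with
  | FVar _ => True
  | BVar i => i < k
  | Lam t => wf_at (S k) t
  | App t s => wf_at k t /\ wf_at k s
  end.

Definition well_formed (t : term) : Prop := wf_at 0 t.

Fixpoint fv (t : term) : list nat :=
  match t with
  | FVar f => [f]
  | BVar _ => []
  | Lam t => fv t
  | App t s => fv t ++ fv s
  end.

Fixpoint open_at (k : nat) (u : term) (t : term) : term :=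
  match t with
  | FVar f => FVar f
  | BVar i => if i =? k then u else BVar i
  | Lam t => Lam (open_at (S k) u t)
  | App t s => App (open_at k u t) (open_at k u s)
  end.

(* [open t u] : for the body t of λx.t, this is t{u/x} *)
Definition open (t u : term) : term := open_at 0 u t.

Definition stack := list term.

Inductive kam_step : term * stack -> term * stack -> Prop :=
| kam_app : forall t s pi, kam_step (App t s, pi) (t, s :: pi)
| kam_beta : forall t s pi, kam_step (Lam t, s :: pi) (open t s, pi).

Definition kam_star : term * stack -> term * stack -> Prop :=
  clos_refl_trans (term * stack) kam_step.

Definition nf_bisimulation (Rel : term -> term -> Prop) : Prop :=
  (forall t s, Rel t s -> Rel s t) /\
  (forall t s, Rel t s ->
     (forall t', kam_star (t, []) (Lam t', []) ->
        exists s', kam_star (s, []) (Lam s', []) /\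
          (forall f, ~ In f (fv t') -> ~ In f (fv s') ->
             Rel (open t' (FVar f)) (open s' (FVar f)))) /\
     (forall f pi, kam_star (t, []) (FVar f, pi) ->
        exists pi', kam_star (s, []) (FVar f, pi') /\ Forall2 Rel pi pi')).

Definition nf_bisimilar (t s : term) : Prop :=
  exists Rel, nf_bisimulation Rel /\ Rel t s.

Definition n_c := 0.
Definition n_hd := 1.
Definition n_b := 2.
Definition n_k := 3.
Definition n_init := 4.
Definition n_rec := 5.
Definition n_ch := 6.
Definition n_lambda := 7.
Definition n_enter := 8.
Definition n_skip := 9.
Definition n_done := 10.
Definition n_suc := 11.
Definition n_z := 12.

Definition H_names : list name := [n_c; n_hd; n_b; n_k; n_init; n_rec; n_ch].

Definition psum (P Q : proc) : proc :=
  PPar (POut n_ch P) (PPar (POut n_ch Q) (PIn n_ch (PIn n_ch (PVar 1)))).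

Fixpoint num (n : nat) : proc :=
  match n with
  | 0 => PIn n_z (POut n_init PNil)
  | S m => PIn n_suc (num m)
  end.

Definition stack_nil : proc := PIn n_b (PVar 0).

Definition Restart : proc :=
  PIn n_lambda (PIn n_k
    (PPar (POut n_hd (PVar 0))
    (PPar (POut n_k (PIn n_suc (PVar 1)))
    (PPar (POut n_c stack_nil)
          (POut n_b PNil))))).

Definition Choice (P : proc) : proc :=
  psum (PIn n_enter (PIn n_c (PPar (shiftn 2 P) (POut n_c stack_nil))))
       (PIn n_skip (POut n_init PNil)).

Definition Cont : proc :=
  PIn n_c (PPar (PVar 0)
          (PPar (POut n_b (PIn n_done PNil))
                (PIn n_hd (PIn n_b (Choice (PVar 1)))))).

Definition Rec : proc :=
  PIn n_init (PIn n_rec (PPar (PVar 0) (PPar (POut n_rec (PVar 0)) Cont))).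

(* [tr rho t]: rho maps the de Bruijn index of a lambda-bound variable to
   the de Bruijn index of the corresponding process variable *)
Fixpoint tr (rho : nat -> nat) (t : term) : proc :=
  match t with
  | FVar f => num f
  | BVar i => PVar (rho i)
  | App t s =>
      PIn n_c (PPar (tr (fun i => S (rho i)) t)
                    (POut n_c (PPar (POut n_hd (tr (fun i => S (rho i)) s))
                                    (POut n_c (PVar 0)))))
  | Lam t =>
      PIn n_c (PPar (PVar 0)
              (PPar (POut n_b Restart)
                    (PIn n_hd (PIn n_b
                       (tr (fun i => match i with 0 => 1 | S j => rho j + 3 end) t)))))
  end.

Definition tr_term (t : term) : proc := tr (fun i => i) t.

Fixpoint tr_stack (pi : stack) : proc :=
  match pi with
  | [] => stack_nil
  | t :: pi => PPar (POut n_hd (tr_term t)) (POut n_c (tr_stack pi))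
  end.

Definition tr_ev (t : term) (pi : stack) (n : nat) : proc :=
  PPar (tr_term t)
  (PPar (POut n_c (tr_stack pi))
  (PPar (POut n_k (num n))
  (PPar Rec
        (POut n_rec Rec)))).

From Stdlib Require Import List Arith Relations Permutation Lia.
Import ListNotations.

(* The encoding of a machine configuration is a parallel soup whose only
   visible actions are inputs on flag names outside H; everything else is
   internal bookkeeping on H.  Every state such a soup reaches belongs to a
   few invariant classes that track the run of the Krivine machine, so two
   encodings of normal-form bisimilar terms are related by a bisimulation on
   soups, which the barbed contexts cannot break: a context can only offer
   messages on the flags, and those are read by both sides in lockstep.
   Conversely, a barbed context can probe each flag with a message: the
   lambda flag reveals when the machine stops on an abstraction (and restarts
   it on a fresh variable), the suc/z flags spell out a head variable, and the
   enter/skip flags of the internal choice let it explore each argument of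
   the stack; the induced relation on terms, closed under renaming of free
   variables, is a normal-form bisimulation. *)

(** * Soups *)

(* A process is handled through the multiset of its parallel components; the
   [soup_step] relation is the LTS of HOcore read on such multisets. *)

Definition proc_eq_dec : forall P Q : proc, {P = Q} + {P <> Q}.
Proof. decide equality; apply Nat.eq_dec. Defined.

Fixpoint flatten (P : proc) : list proc :=
  match P with
  | PPar P Q => flatten P ++ flatten Q
  | PNil => []
  | _ => [P]
  end.

Inductive soup_step : list proc -> label -> list proc -> Prop :=
| soup_in : forall M a B X r, Permutation M (PIn a B :: r) ->
    soup_step M (LIn a X) (r ++ flatten (psubst B X))
| soup_out : forall M a X r, Permutation M (POut a X :: r) -> soup_step M (LOut a X) r
| soup_com : forall M a X B r, Permutation M (POut a X :: PIn a B :: r) ->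
    soup_step M LTau (r ++ flatten (psubst B X)).

Lemma count_occ_cons_if (a : proc) l x : count_occ proc_eq_dec (a :: l) x =
  (if proc_eq_dec a x then 1 else 0) + count_occ proc_eq_dec l x.
Proof. simpl. destruct (proc_eq_dec a x); reflexivity. Qed.

(* Decides permutation goals from permutation hypotheses by comparing the
   number of occurrences of an arbitrary process on both sides. *)
Ltac solve_perm :=
  apply (Permutation_count_occ proc_eq_dec); let x := fresh "x" in intro x;
  repeat match goal with
  | H : Permutation _ _ |- _ =>
      pose proof (proj1 (Permutation_count_occ proc_eq_dec _ _) H x); clear H
  end;
  repeat (rewrite ?count_occ_app, ?count_occ_cons_if, ?count_occ_nil in * );
  repeat match goal with
  | |- context [if ?d then _ else _] => destruct d
  | H : context [if ?d then _ else _] |- _ => destruct d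
  end;
  lia.

Lemma soup_step_perm M M' l S : Permutation M M' -> soup_step M l S -> soup_step M' l S.
Proof.
  intros HP H; apply Permutation_sym in HP.
  destruct H; [apply soup_in|apply soup_out|eapply soup_com]; eapply Permutation_trans; eauto.
Qed.

Lemma soup_step_out_inv M a X S : soup_step M (LOut a X) S -> Permutation M (POut a X :: S).
Proof. intro H; inversion H; subst; auto. Qed.

Lemma soup_step_in_inv M a X S : soup_step M (LIn a X) S ->
  exists B r, Permutation M (PIn a B :: r) /\ S = r ++ flatten (psubst B X).
Proof. intro H; inversion H; subst; eauto. Qed.

Lemma soup_step_tau_inv M S : soup_step M LTau S ->
  exists a X B r, Permutation M (POut a X :: PIn a B :: r) /\ S = r ++ flatten (psubst B X).
Proof. intro H; inversion H; subst; eauto 7. Qed.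

Lemma soup_step_app_r M K l S :
  soup_step M l S -> exists S', soup_step (M ++ K) l S' /\ Permutation S' (S ++ K).
Proof.
  intro H; destruct H.
  - eexists; split; [apply (soup_in _ a B X (r ++ K))|]; solve_perm.
  - eexists; split; [apply (soup_out _ a X (r ++ K))|]; solve_perm.
  - eexists; split; [apply (soup_com _ a X B (r ++ K))|]; solve_perm.
Qed.

Lemma soup_step_app_l M K l S :
  soup_step M l S -> exists S', soup_step (K ++ M) l S' /\ Permutation S' (K ++ S).
Proof.
  intro H; destruct H.
  - eexists; split; [apply (soup_in _ a B X (K ++ r))|]; solve_perm.
  - eexists; split; [apply (soup_out _ a X (K ++ r))|]; solve_perm.
  - eexists; split; [apply (soup_com _ a X B (K ++ r))|]; solve_perm.
Qed.

Lemma step_soup_step P l P' : step P l P' ->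
  exists S, soup_step (flatten P) l S /\ Permutation (flatten P') S.
Proof.
  induction 1; simpl.
  - exists []; split; [apply soup_out; auto|auto].
  - exists ([] ++ flatten (psubst Q P)); split; [apply soup_in; auto|simpl; auto].
  - destruct IHstep as [S [H1 H2]].
    destruct (soup_step_app_r _ (flatten Q) _ _ H1) as [S' [H3 H4]].
    exists S'; split; auto. solve_perm.
  - destruct IHstep as [S [H1 H2]].
    destruct (soup_step_app_l _ (flatten P) _ _ H1) as [S' [H3 H4]].
    exists S'; split; auto. solve_perm.
  - destruct IHstep1 as [S1 [H1 H2]]. destruct IHstep2 as [S2 [H3 H4]].
    apply soup_step_out_inv in H1. apply soup_step_in_inv in H3 as [B [r [H5 ->]]].
    exists ((S1 ++ r) ++ flatten (psubst B R)); split; [apply (soup_com _ a R B (S1 ++ r))|];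
      solve_perm.
  - destruct IHstep1 as [S1 [H1 H2]]. destruct IHstep2 as [S2 [H3 H4]].
    apply soup_step_in_inv in H1 as [B [r [H5 ->]]]. apply soup_step_out_inv in H3.
    exists ((r ++ S2) ++ flatten (psubst B R)); split; [apply (soup_com _ a R B (r ++ S2))|];
      solve_perm.
Qed.

Lemma In_perm_cons (x : proc) l : In x l -> exists r, Permutation l (x :: r).
Proof.
  intro H; apply in_split in H as [l1 [l2 ->]]. exists (l1 ++ l2).
  apply Permutation_sym, Permutation_middle.
Qed.

Lemma perm_app_cons_inv (x : proc) l1 l2 r : Permutation (l1 ++ l2) (x :: r) ->
  (exists r1, Permutation l1 (x :: r1)) \/ (exists r2, Permutation l2 (x :: r2)).
Proof.
  intro H.
  assert (Hi : In x (l1 ++ l2)) by (eapply Permutation_in; [apply Permutation_sym, H|left; auto]).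
  apply in_app_or in Hi as [Hi|Hi]; [left|right]; apply In_perm_cons; auto.
Qed.

Lemma perm_singleton_cons (x y : proc) r : Permutation [x] (y :: r) -> x = y /\ r = [].
Proof.
  intro H. pose proof (Permutation_length H) as Hl. destruct r; [|simpl in Hl; lia].
  apply Permutation_length_1 in H. auto.
Qed.

Definition soup_steps_lift (P : proc) : Prop :=
  forall l S, soup_step (flatten P) l S -> exists P', step P l P' /\ Permutation (flatten P') S.

Lemma soup_steps_lift_par P1 P2 :
  soup_steps_lift P1 -> soup_steps_lift P2 -> soup_steps_lift (PPar P1 P2).
Proof.
  intros IH1 IH2 l S H; simpl in H. inversion H; subst.
  - destruct (perm_app_cons_inv _ _ _ _ H0) as [[r1 Hr]|[r2 Hr]].
    + destruct (IH1 (LIn a X) (r1 ++ flatten (psubst B X))) as [P' [Hs Hp]]; [constructor; auto|].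
      exists (PPar P' P2); split; [constructor; auto|simpl; solve_perm].
    + destruct (IH2 (LIn a X) (r2 ++ flatten (psubst B X))) as [P' [Hs Hp]]; [constructor; auto|].
      exists (PPar P1 P'); split; [constructor; auto|simpl; solve_perm].
  - destruct (perm_app_cons_inv _ _ _ _ H0) as [[r1 Hr]|[r2 Hr]].
    + destruct (IH1 (LOut a X) r1) as [P' [Hs Hp]]; [constructor; auto|].
      exists (PPar P' P2); split; [constructor; auto|simpl; solve_perm].
    + destruct (IH2 (LOut a X) r2) as [P' [Hs Hp]]; [constructor; auto|].
      exists (PPar P1 P'); split; [constructor; auto|simpl; solve_perm].
  - destruct (perm_app_cons_inv _ _ _ _ H0) as [[r1 Hr]|[r2 Hr]].
    + assert (Hq : Permutation (r1 ++ flatten P2) (PIn a B :: r)) by solve_perm.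
      destruct (perm_app_cons_inv _ _ _ _ Hq) as [[r1' Hr']|[r2' Hr']].
      * destruct (IH1 LTau (r1' ++ flatten (psubst B X))) as [P' [Hs Hp]].
        { apply (soup_com _ a X B r1'). solve_perm. }
        exists (PPar P' P2); split; [constructor; auto|simpl; solve_perm].
      * destruct (IH1 (LOut a X) r1) as [P' [Hs Hp]]; [constructor; auto|].
        destruct (IH2 (LIn a X) (r2' ++ flatten (psubst B X))) as [Q' [Hs' Hp']];
          [constructor; auto|].
        exists (PPar P' Q'); split; [eapply st_coml; eauto|simpl; solve_perm].
    + assert (Hq : Permutation (flatten P1 ++ r2) (PIn a B :: r)) by solve_perm.
      destruct (perm_app_cons_inv _ _ _ _ Hq) as [[r1' Hr']|[r2' Hr']].
      * destruct (IH1 (LIn a X) (r1' ++ flatten (psubst B X))) as [P' [Hs Hp]];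
          [constructor; auto|].
        destruct (IH2 (LOut a X) r2) as [Q' [Hs' Hp']]; [constructor; auto|].
        exists (PPar P' Q'); split; [eapply st_comr; eauto|simpl; solve_perm].
      * destruct (IH2 LTau (r2' ++ flatten (psubst B X))) as [P' [Hs Hp]].
        { apply (soup_com _ a X B r2'). solve_perm. }
        exists (PPar P1 P'); split; [constructor; auto|simpl; solve_perm].
Qed.

Lemma soup_step_step P : soup_steps_lift P.
Proof.
  induction P as [a0 P _|a0 P _|P1 IHP1 P2 IHP2|i|]; [| |apply soup_steps_lift_par; auto| |];
    intros l S H; simpl in H; inversion H; subst;
    try (pose proof (Permutation_length H0); simpl in *; lia);
    apply perm_singleton_cons in H0 as [He ->]; try discriminate; injection He as <- <-.
  - exists (psubst P X). split; [constructor|simpl; auto].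
  - exists PNil. split; [constructor|simpl; auto].
Qed.

Lemma fn_shift_from d P : fn (shift_from d P) = fn P.
Proof.
  revert d; induction P; intros d; simpl; try rewrite IHP; try rewrite IHP1, IHP2; auto.
  destruct (d <=? n); auto.
Qed.

Lemma fn_shiftn n P : fn (shiftn n P) = fn P.
Proof. induction n; simpl; auto. rewrite fn_shift_from; auto. Qed.

Lemma fn_subst d Q P : incl (fn (subst_at d Q P)) (fn P ++ fn Q).
Proof.
  revert d; induction P; intros d; simpl; intros x Hx.
  - destruct Hx as [->|Hx]; [left; auto|right]. apply IHP in Hx.
    apply in_app_or in Hx as [?|?]; apply in_or_app; auto.
  - destruct Hx as [->|Hx]; [left; auto|right]. apply IHP in Hx.
    apply in_app_or in Hx as [?|?]; apply in_or_app; auto.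
  - apply in_app_or in Hx as [Hx|Hx]; [apply IHP1 in Hx|apply IHP2 in Hx];
      apply in_app_or in Hx as [?|?]; apply in_or_app; auto; left; apply in_or_app; auto.
  - destruct (Nat.compare n d); simpl in Hx; try tauto. rewrite fn_shiftn in Hx; auto.
  - destruct Hx.
Qed.

Lemma fn_flatten P c : In c (flatten P) -> incl (fn c) (fn P).
Proof.
  induction P; simpl; intros H; try (destruct H as [<-|[]]; apply incl_refl).
  - apply in_app_or in H as [H|H]; [apply IHP1 in H|apply IHP2 in H]; intros x Hx;
      apply in_or_app; auto.
  - destruct H.
Qed.

Definition avoids_H (G : list proc) := forall c a, In c G -> In a (fn c) -> ~ In a H_names.

Lemma avoids_H_perm G G' : Permutation G G' -> avoids_H G -> avoids_H G'.
Proof. intros HP H c a Hc. apply H. eapply Permutation_in; [apply Permutation_sym, HP|auto]. Qed.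

Lemma avoids_H_app G G' : avoids_H G -> avoids_H G' -> avoids_H (G ++ G').
Proof. intros H1 H2 c a Hc. apply in_app_or in Hc as [Hc|Hc]; [apply H1|apply H2]; auto. Qed.

Lemma avoids_H_flatten_psubst a B X :
  avoids_H [PIn a B; POut a X] -> avoids_H (flatten (psubst B X)).
Proof.
  intros H c x Hc Hx. apply fn_flatten in Hc. apply Hc, fn_subst in Hx.
  apply in_app_or in Hx as [Hx|Hx].
  - apply (H (PIn a B)); simpl; auto.
  - apply (H (POut a X)); simpl; auto.
Qed.

Fixpoint silent_proc (P : proc) : Prop :=
  match P with
  | PIn _ Q => silent_proc Q
  | POut a Q => In a H_names /\ silent_proc Q
  | PPar P Q => silent_proc P /\ silent_proc Q
  | _ => True
  end.

Lemma silent_proc_shift_from d P : silent_proc P -> silent_proc (shift_from d P).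
Proof. revert d; induction P; simpl; intros d H; intuition. destruct (d <=? n); simpl; auto. Qed.

Lemma silent_proc_shiftn n P : silent_proc P -> silent_proc (shiftn n P).
Proof. induction n; simpl; auto. intros; apply silent_proc_shift_from; auto. Qed.

Lemma silent_proc_subst d Q P : silent_proc Q -> silent_proc P -> silent_proc (subst_at d Q P).
Proof.
  revert d; induction P; simpl; intros d HQ H; intuition.
  destruct (Nat.compare n d); simpl; auto. apply silent_proc_shiftn; auto.
Qed.

Lemma silent_proc_flatten P : silent_proc P -> Forall silent_proc (flatten P).
Proof.
  induction P; simpl; intros H; try (constructor; [exact H|constructor]).
  - apply Forall_app; intuition.
  - constructor.
Qed.

Definition silent (M : list proc) := Forall silent_proc M.

Lemma silent_perm M M' : Permutation M M' -> silent M -> silent M'.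
Proof. intros HP H. unfold silent in *. rewrite Forall_forall in *. intros x Hx. apply H.
  eapply Permutation_in; [apply Permutation_sym, HP|auto]. Qed.

Lemma silent_soup_step M l S : silent M -> soup_step M l S ->
  (forall a X, l = LIn a X -> silent_proc X) -> silent S.
Proof.
  intros HN H Hl. destruct H.
  - apply silent_perm in H; auto. inversion H; subst. apply Forall_app; split; auto.
    apply silent_proc_flatten, silent_proc_subst; eauto.
  - apply silent_perm in H; auto. inversion H; auto.
  - apply silent_perm in H; auto. inversion H; subst. inversion H3; subst.
    apply Forall_app; split; auto. apply silent_proc_flatten, silent_proc_subst; auto. apply H2.
Qed.

Lemma silent_out M a X r : silent M -> Permutation M (POut a X :: r) -> In a H_names.
Proof. intros HN HP. apply silent_perm in HP; auto. inversion HP; subst. apply H1. Qed.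

Definition soup_tau (M M' : list proc) := exists S, soup_step M LTau S /\ Permutation S M'.
Definition soup_star := clos_refl_trans _ soup_tau.

Lemma silent_soup_star M M' : silent M -> soup_star M M' -> silent M'.
Proof.
  induction 2; auto. destruct H0 as [S [H1 H2]]. eapply silent_perm; [exact H2|].
  eapply silent_soup_step; eauto. intros; discriminate.
Qed.

Lemma lift_soup_tau N N' Q G : soup_tau N N' -> Permutation (flatten Q) (N ++ G) ->
  exists Q', tau_step Q Q' /\ Permutation (flatten Q') (N' ++ G).
Proof.
  intros [S [H1 H2]] HP.
  destruct (soup_step_app_r _ G _ _ H1) as [S' [H3 H4]].
  apply (soup_step_perm _ (flatten Q)) in H3; [|apply Permutation_sym; auto].
  apply soup_step_step in H3 as [Q' [H5 H6]]. exists Q'; split; auto. solve_perm.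
Qed.

Lemma lift_soup_star N N' Q G : soup_star N N' -> Permutation (flatten Q) (N ++ G) ->
  exists Q', tau_star Q Q' /\ Permutation (flatten Q') (N' ++ G).
Proof.
  intros H; apply clos_rt_rt1n in H. revert Q; induction H; intros Q HP.
  - exists Q; split; auto. apply rt_refl.
  - destruct (lift_soup_tau _ _ _ _ H HP) as [Q1 [H1 H2]].
    destruct (IHclos_refl_trans_1n _ H2) as [Q2 [H3 H4]].
    exists Q2; split; auto. eapply rt_trans; [apply rt_step; exact H1|exact H3].
Qed.

Lemma soup_star_trans A B C : soup_star A B -> soup_star B C -> soup_star A C.
Proof. intros; eapply rt_trans; eauto. Qed.

Lemma soup_star_step A B : soup_tau A B -> soup_star A B.
Proof. intros; apply rt_step; auto. Qed.

Lemma soup_star_refl A : soup_star A A.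
Proof. apply rt_refl. Qed.

Lemma soup_tau_perm A A' B : Permutation A A' -> soup_tau A B -> soup_tau A' B.
Proof. intros HP [S [H1 H2]]. exists S; split; auto. eapply soup_step_perm; eauto. Qed.

Lemma soup_star_perm A A' B : Permutation A A' -> soup_star A B ->
  exists B', soup_star A' B' /\ Permutation B B'.
Proof.
  intros HP H. apply clos_rt_rt1n in H. revert A' HP; induction H; intros A' HP.
  - exists A'; split; auto. apply rt_refl.
  - apply (soup_tau_perm _ A') in H; auto.
    destruct (IHclos_refl_trans_1n y) as [B' [H2 H3]]; [apply Permutation_refl|].
    exists B'; split; auto. eapply rt_trans; [apply rt_step; eauto|auto].
Qed.

Lemma soup_tau_intro M a X B r T : Permutation M (POut a X :: PIn a B :: r) ->
  Permutation (r ++ flatten (psubst B X)) T -> soup_tau M T.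
Proof. intros H1 H2. exists (r ++ flatten (psubst B X)); split; auto. eapply soup_com; eauto. Qed.

Lemma soup_in_intro M a B r X T : Permutation M (PIn a B :: r) ->
  Permutation (r ++ flatten (psubst B X)) T ->
  exists N2, soup_step M (LIn a X) N2 /\ Permutation N2 T.
Proof. intros H1 H2. exists (r ++ flatten (psubst B X)); split; auto. constructor; auto. Qed.

Lemma soup_tau_perm_l M X Y : Permutation M X -> soup_tau X Y -> soup_tau M Y.
Proof. intros HP H. eapply soup_tau_perm; [apply Permutation_sym; exact HP|exact H]. Qed.

Lemma soup_star_perm_l M X Y : Permutation M X -> soup_star X Y ->
  exists Y', soup_star M Y' /\ Permutation Y' Y.
Proof.
  intros HP H. destruct (soup_star_perm X M Y (Permutation_sym HP) H) as [Y' [H1 H2]].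
  exists Y'; split; auto. apply Permutation_sym; auto.
Qed.

Definition soup_reach (M Y : list proc) := exists M', soup_star M M' /\ Permutation M' Y.

Lemma soup_reach_refl M Y : Permutation M Y -> soup_reach M Y.
Proof. intros; exists M; split; auto; apply soup_star_refl. Qed.

Lemma soup_reach_trans M X Y : soup_reach M X -> soup_reach X Y -> soup_reach M Y.
Proof.
  intros [M1 [H1 H2]] [X1 [H3 H4]].
  destruct (soup_star_perm_l M1 X X1 H2 H3) as [Y1 [H5 H6]].
  exists Y1; split; [eapply soup_star_trans; eauto|eapply Permutation_trans; eauto].
Qed.

Lemma soup_reach_perm_tau M X Y : Permutation M X -> soup_tau X Y -> soup_reach M Y.
Proof. intros HP H. exists Y; split; auto. apply soup_star_step. eapply soup_tau_perm_l; eauto. Qed.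

Lemma soup_reach_tau X Y : soup_tau X Y -> soup_reach X Y.
Proof. intros; eapply soup_reach_perm_tau; eauto. Qed.

(** * Soup bisimulations *)

Definition perm_closure (R : list proc -> list proc -> Prop) (A B : list proc) :=
  exists M N, Permutation A M /\ Permutation B N /\ R M N.

Definition soup_weak_input (R : list proc -> list proc -> Prop) N a X S :=
  exists N1 N2 N3, soup_star N N1 /\ soup_step N1 (LIn a X) N2 /\ soup_star N2 N3 /\
    perm_closure R S N3.

(* Weak simulation on silent soups in which the only observable actions are
   inputs on names outside H; outputs need not be matched since silent soups
   only output on H. *)
Definition soup_simulates (R : list proc -> list proc -> Prop) (M N : list proc) :=
  silent M /\
  (forall S, soup_step M LTau S -> exists N', soup_star N N' /\ perm_closure R S N') /\
  (forall a X S, ~ In a H_names -> soup_step M (LIn a X) S -> soup_weak_input R N a X S).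

Definition soup_bisimulation (R : list proc -> list proc -> Prop) :=
  forall M N, R M N -> R N M /\ soup_simulates R M N.

Section SoupBisimulation.

Variable R : list proc -> list proc -> Prop.
Hypothesis HR : soup_bisimulation R.

(* [G] is the part of the soups contributed by the barbed contexts. *)
Definition soup_closure (P Q : proc) : Prop :=
  exists M N G, Permutation (flatten P) (M ++ G) /\ Permutation (flatten Q) (N ++ G) /\
    avoids_H G /\ R M N.

Lemma soup_closure_sym P Q : soup_closure P Q -> soup_closure Q P.
Proof.
  intros [M [N [G [H1 [H2 [H3 H4]]]]]]. exists N, M, G; repeat split; auto. apply HR; auto.
Qed.

Lemma soup_closure_par P Q R' : soup_closure P Q -> (forall a, In a (fn R') -> ~ In a H_names) ->
  soup_closure (PPar P R') (PPar Q R').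
Proof.
  intros [M [N [G [H1 [H2 [H3 H4]]]]]] HR'. exists M, N, (G ++ flatten R'); simpl.
  repeat split; auto; try solve_perm.
  apply avoids_H_app; auto. intros c a Hc Ha. apply (HR' a), (fn_flatten R' c); auto.
Qed.

Lemma soup_closure_barb P Q mu : soup_closure P Q -> sbarb H_names P mu -> wbarb H_names Q mu.
Proof.
  intros [M [N [G [H1 [H2 [H3 H4]]]]]].
  destruct (HR _ _ H4) as [_ [Hsil [_ Hin]]].
  intros Hb; destruct mu as [a|a]; simpl in Hb; destruct Hb as [Ha [X [R' HR']]];
    apply step_soup_step in HR' as [S [HS _]]; apply (soup_step_perm _ _ _ _ H1) in HS.
  - apply soup_step_in_inv in HS as [B [r [Hp ->]]].
    destruct (perm_app_cons_inv _ _ _ _ Hp) as [[rM HM]|[rG HG]].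
    + destruct (Hin a X (rM ++ flatten (psubst B X)) Ha) as [N1 [N2 [N3 [Hs1 [Hs2 _]]]]];
        [constructor; auto|].
      destruct (lift_soup_star _ _ _ _ Hs1 H2) as [Q1 [Ht Hq]].
      destruct (soup_step_app_r _ G _ _ Hs2) as [S' [Hs3 _]].
      apply (soup_step_perm _ (flatten Q1)) in Hs3; [|apply Permutation_sym; auto].
      apply soup_step_step in Hs3 as [Q2 [Hst _]].
      exists Q1; split; auto. simpl; split; eauto.
    + assert (Hs : soup_step (flatten Q) (LIn a X) ((N ++ rG) ++ flatten (psubst B X)))
        by (constructor; solve_perm).
      apply soup_step_step in Hs as [Q2 [Hst _]].
      exists Q; split; [apply rt_refl|]. simpl; split; eauto.
  - apply soup_step_out_inv in HS.
    destruct (perm_app_cons_inv _ _ _ _ HS) as [[rM HM]|[rG HG]].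
    + exfalso. apply Ha. eapply silent_out; eauto.
    + assert (Hs : soup_step (flatten Q) (LOut a X) (N ++ rG)) by (constructor; solve_perm).
      apply soup_step_step in Hs as [Q2 [Hst _]].
      exists Q; split; [apply rt_refl|]. simpl; split; eauto.
Qed.

Section TauStep.

Variables (Q P' : proc) (M N G : list proc) (a : name) (X B : proc) (r : list proc).
Hypotheses (HQ : Permutation (flatten Q) (N ++ G))
  (HG : avoids_H G) (HMN : R M N) (HP' : Permutation (flatten P') (r ++ flatten (psubst B X))).

Lemma soup_closure_tau_inner rM : Permutation M (POut a X :: PIn a B :: rM) ->
  Permutation r (rM ++ G) -> exists Q', tau_star Q Q' /\ soup_closure P' Q'.
Proof.
  intros HM Hr. destruct (HR _ _ HMN) as [_ [_ [Htau _]]].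
  destruct (Htau (rM ++ flatten (psubst B X))) as [N' [Hs1 [M2 [N2 [Hm [Hn HR2]]]]]];
    [apply (soup_com _ a X B rM); auto|].
  destruct (lift_soup_star _ _ _ _ Hs1 HQ) as [Q1 [Ht Hq1]].
  exists Q1; split; auto. exists M2, N2, G; repeat split; try eassumption; solve_perm.
Qed.

Lemma soup_closure_tau_input rM rG : Permutation M (PIn a B :: rM) ->
  Permutation G (POut a X :: rG) -> Permutation r (rM ++ rG) ->
  exists Q', tau_star Q Q' /\ soup_closure P' Q'.
Proof.
  intros HM HGo Hr. destruct (HR _ _ HMN) as [_ [_ [_ Hin]]].
  assert (Ha : ~ In a H_names).
  { apply (HG (POut a X) a); [|simpl; auto].
    eapply Permutation_in; [apply Permutation_sym, HGo|left; auto]. }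
  destruct (Hin a X (rM ++ flatten (psubst B X)) Ha) as
      [N1 [N2 [N3 [Hs1 [Hs2 [Hs3 [M4 [N4 [Hm [Hn HR4]]]]]]]]]]; [constructor; auto|].
  destruct (lift_soup_star _ _ _ _ Hs1 HQ) as [Q1 [Ht1 Hq1]].
  apply soup_step_in_inv in Hs2 as [B' [r1 [Hp1 ->]]].
  assert (Hs : soup_step (flatten Q1) LTau ((r1 ++ rG) ++ flatten (psubst B' X)))
    by (apply (soup_com _ a X B' (r1 ++ rG)); solve_perm).
  apply soup_step_step in Hs as [Q2 [Ht2 Hq2]].
  assert (Hq2' : Permutation (flatten Q2) ((r1 ++ flatten (psubst B' X)) ++ rG)) by solve_perm.
  destruct (lift_soup_star _ _ _ _ Hs3 Hq2') as [Q3 [Ht3 Hq3]].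
  exists Q3; split; [eapply rt_trans; [exact Ht1|]; eapply rt_trans; [apply rt_step|]; eauto|].
  exists M4, N4, rG; repeat split; auto; try solve_perm.
  apply avoids_H_perm in HGo; auto. intros c x Hc; apply HGo; simpl; auto.
Qed.

Lemma soup_closure_tau_context rG : Permutation G (POut a X :: PIn a B :: rG) ->
  Permutation r (M ++ rG) -> exists Q', tau_star Q Q' /\ soup_closure P' Q'.
Proof.
  intros HG2 Hr.
  assert (Hs : soup_step (flatten Q) LTau ((N ++ rG) ++ flatten (psubst B X)))
    by (apply (soup_com _ a X B (N ++ rG)); solve_perm).
  apply soup_step_step in Hs as [Q2 [Ht2 Hq2]].
  exists Q2; split; [apply rt_step; auto|].
  exists M, N, (rG ++ flatten (psubst B X)); repeat split; auto; try solve_perm.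
  apply avoids_H_perm in HG2; auto. apply avoids_H_app.
  - intros c x Hc; apply HG2; simpl; auto.
  - apply (avoids_H_flatten_psubst a). intros c x Hc; apply HG2; simpl in Hc |- *; intuition.
Qed.

End TauStep.

Lemma soup_closure_tau P Q P' : soup_closure P Q -> tau_step P P' ->
  exists Q', tau_star Q Q' /\ soup_closure P' Q'.
Proof.
  intros [M [N [G [H1 [H2 [H3 H4]]]]]] Hst.
  apply step_soup_step in Hst as [S [HS HP']]. apply (soup_step_perm _ _ _ _ H1) in HS.
  apply soup_step_tau_inv in HS as [a [X [B [r [Hp ->]]]]].
  destruct (perm_app_cons_inv _ _ _ _ Hp) as [[rM HM]|[rG HGo]].
  - assert (Hq : Permutation (rM ++ G) (PIn a B :: r)) by solve_perm.
    destruct (perm_app_cons_inv _ _ _ _ Hq) as [[rM' HM']|[rG' HGi]].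
    + eapply soup_closure_tau_inner
        with (M := M) (N := N) (G := G) (a := a) (X := X) (B := B) (r := r) (rM := rM');
        try eassumption; solve_perm.
    + (* the output of [M] is on H, the input of the context is not *)
      exfalso. destruct (HR _ _ H4) as [_ [Hsil _]].
      apply (H3 (PIn a B) a); [|simpl; auto|eapply silent_out; eauto].
      eapply Permutation_in; [apply Permutation_sym, HGi|left; auto].
  - assert (Hq : Permutation (M ++ rG) (PIn a B :: r)) by solve_perm.
    destruct (perm_app_cons_inv _ _ _ _ Hq) as [[rM' HM']|[rG' HGi]].
    + eapply soup_closure_tau_input
        with (M := M) (N := N) (G := G) (a := a) (X := X) (B := B) (r := r) (rM := rM') (rG := rG);
        try eassumption; solve_perm.
    + eapply soup_closure_tau_context
        with (M := M) (N := N) (G := G) (a := a) (X := X) (B := B) (r := r) (rG := rG');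
        try eassumption; solve_perm.
Qed.

Lemma soup_bisimulation_barbed M N P Q : R M N ->
  Permutation (flatten P) M -> Permutation (flatten Q) N -> barbed_bisimilar H_names P Q.
Proof.
  intros HMN HPM HQN. exists soup_closure; split.
  - split; [exact soup_closure_sym|].
    intros P1 Q1 H; repeat split.
    + intros mu; apply soup_closure_barb; auto.
    + intros R' HR'; apply soup_closure_par; auto.
    + intros P' Hst; eapply soup_closure_tau; eauto.
  - exists M, N, []; rewrite !app_nil_r; repeat split; auto. intros c a [].
Qed.

End SoupBisimulation.

Notation bb := (barbed_bisimilar H_names).

Lemma bb_sym P Q : bb P Q -> bb Q P.
Proof. intros [R [[Hs Hb] HR]]. exists R; split; [split|]; auto. Qed.

Lemma bb_par P Q R : bb P Q -> (forall a, In a (fn R) -> ~ In a H_names) ->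
  bb (PPar P R) (PPar Q R).
Proof. intros [Rl [[Hs Hb] HR]] HRn. exists Rl; split; [split|]; auto. apply (Hb _ _ HR); auto. Qed.

Lemma bb_barb P Q mu : bb P Q -> sbarb H_names P mu -> wbarb H_names Q mu.
Proof. intros [Rl [[Hs Hb] HR]] H. apply (Hb _ _ HR); auto. Qed.

Lemma bb_tau_star P Q P' : bb P Q -> tau_star P P' -> exists Q', tau_star Q Q' /\ bb P' Q'.
Proof.
  intros [Rl [[Hs Hb] HR]] H. apply clos_rt_rt1n in H. revert Q HR. induction H; intros Q HR.
  - exists Q; split; [apply rt_refl|]. exists Rl; split; [split|]; auto.
  - destruct (proj2 (proj2 (Hb _ _ HR)) y H) as [Q1 [H1 H2]].
    destruct (IHclos_refl_trans_1n Q1 H2) as [Q2 [H3 H4]].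
    exists Q2; split; auto. eapply rt_trans; eauto.
Qed.

Lemma tau_star_soup_star P P' M : tau_star P P' -> Permutation (flatten P) M ->
  exists M', soup_star M M' /\ Permutation (flatten P') M'.
Proof.
  intros H. apply clos_rt_rt1n in H. revert M. induction H; intros M HP.
  - exists M; split; auto. apply soup_star_refl.
  - apply step_soup_step in H as [S [H1 H2]]. apply (soup_step_perm _ M) in H1; auto.
    destruct (IHclos_refl_trans_1n S H2) as [M' [H3 H4]].
    exists M'; split; auto.
    eapply soup_star_trans; [apply soup_star_step; exists S; split; eauto|auto].
Qed.

Lemma lift_soup_reach P M Y : Permutation (flatten P) M -> soup_reach M Y ->
  exists P', tau_star P P' /\ Permutation (flatten P') Y.
Proof.
  intros HP [M' [H1 H2]]. destruct (lift_soup_star M M' P [] H1) as [P' [H3 H4]];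
    [rewrite app_nil_r; auto|].
  exists P'; split; auto. rewrite app_nil_r in H4. eapply Permutation_trans; eauto.
Qed.

Lemma message_tau P M a X M2 : Permutation (flatten P) M -> soup_step M (LIn a X) M2 ->
  exists P', tau_step (PPar P (POut a X)) P' /\ Permutation (flatten P') M2.
Proof.
  intros HP H. apply soup_step_in_inv in H as [B [r [H1 ->]]].
  assert (Hs : soup_step (flatten (PPar P (POut a X))) LTau (r ++ flatten (psubst B X)))
    by (apply (soup_com _ a X B r); simpl; solve_perm).
  apply soup_step_step in Hs as [P' [H2 H3]]. exists P'; split; auto.
Qed.

Definition message_run (N : list proc) (a : name) (P : proc) : Prop :=
  (exists N1, soup_star N N1 /\ Permutation (flatten P) (N1 ++ [POut a PNil])) \/
  (exists N1 N2 N3, soup_star N N1 /\ soup_step N1 (LIn a PNil) N2 /\ soup_star N2 N3 /\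
     Permutation (flatten P) N3).

Lemma message_run_tau N a P P' : message_run N a P -> tau_step P P' -> message_run N a P'.
Proof.
  intros H0 Hst. apply step_soup_step in Hst as [S [Hs HS]].
  destruct H0 as [[N1 [H1 H2]]|[N1 [N2 [N3 [H1 [H2 [H3 H4]]]]]]].
  - apply (soup_step_perm _ _ _ _ H2) in Hs.
    apply soup_step_tau_inv in Hs as [b [X [B [r [Hp ->]]]]].
    destruct (perm_app_cons_inv _ _ _ _ Hp) as [[r1 Hr]|[r2 Hr]].
    + assert (Hq : Permutation (r1 ++ [POut a PNil]) (PIn b B :: r)) by solve_perm.
      destruct (perm_app_cons_inv _ _ _ _ Hq) as [[r1' Hr']|[r2' Hr']].
      * left. exists (r1' ++ flatten (psubst B X)). split; [|solve_perm].
        eapply soup_star_trans; [exact H1|]. apply soup_star_step.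
        exists (r1' ++ flatten (psubst B X)); split; auto. apply (soup_com _ b X B r1'). solve_perm.
      * apply perm_singleton_cons in Hr' as [E _]; discriminate.
    + apply perm_singleton_cons in Hr as [E ->]. injection E as E1 E2. subst.
      right. exists N1, (r ++ flatten (psubst B PNil)), (r ++ flatten (psubst B PNil)).
      split; [auto|split; [constructor; solve_perm|split; [apply soup_star_refl|solve_perm]]].
  - right. exists N1, N2. apply (soup_step_perm _ _ _ _ H4) in Hs.
    exists S; split; [auto|split; [auto|split; [|auto]]].
    eapply soup_star_trans; [exact H3|]. apply soup_star_step. exists S; split; auto.
Qed.

Lemma message_run_tau_star Q Q' a :
  tau_star (PPar Q (POut a PNil)) Q' -> message_run (flatten Q) a Q'.
Proof.
  intros H. apply clos_rt_rt1n in H.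
  assert (H0 : message_run (flatten Q) a (PPar Q (POut a PNil)))
    by (left; exists (flatten Q); split; [apply soup_star_refl|apply Permutation_refl]).
  induction H as [|x y z Hxy Hyz IH]; auto.
  apply IH, (message_run_tau _ _ _ _ H0 Hxy).
Qed.

Lemma bisimilar_silent_no_output P Q M N a X : bb P Q -> Permutation (flatten P) M ->
  silent M -> Permutation (flatten Q) (N ++ [POut a X]) -> ~ In a H_names -> False.
Proof.
  intros Hb HP HN HQ Ha.
  assert (Hbar : sbarb H_names Q (BOut a)).
  { simpl. split; auto.
    assert (Hs : soup_step (flatten Q) (LOut a X) N) by (constructor; solve_perm).
    apply soup_step_step in Hs as [Q' [Hs _]]. eauto. }
  apply (bb_barb _ _ _ (bb_sym _ _ Hb)) in Hbar as [P' [H1 [_ [Y [R HR]]]]].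
  destruct (tau_star_soup_star _ _ _ H1 HP) as [M' [H2 H3]].
  apply step_soup_step in HR as [S [HS _]]. apply (soup_step_perm _ _ _ _ H3) in HS.
  apply soup_step_out_inv in HS. apply Ha.
  eapply silent_out; [|exact HS]. eapply silent_soup_star; eauto.
Qed.

(* The input of a silent soup on a fresh name is tested by the context [a<0>]:
   the partner must eventually consume the message, by silence of the left side. *)
Lemma bisimilar_input P Q M a M2 : bb P Q -> Permutation (flatten P) M ->
  soup_step M (LIn a PNil) M2 -> ~ In a H_names -> silent M2 ->
  exists P2 Q2 N1 N2 N3, Permutation (flatten P2) M2 /\ bb P2 Q2 /\ soup_star (flatten Q) N1 /\
    soup_step N1 (LIn a PNil) N2 /\ soup_star N2 N3 /\ Permutation (flatten Q2) N3.
Proof.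
  intros Hb HP Hs Ha HN.
  assert (Hb' : bb (PPar P (POut a PNil)) (PPar Q (POut a PNil)))
    by (apply bb_par; auto; simpl; intros c [<-|[]]; auto).
  destruct (message_tau _ _ _ _ _ HP Hs) as [P2 [H1 H2]].
  destruct (bb_tau_star _ _ _ Hb' (rt_step _ _ _ _ H1)) as [Q2 [H3 H4]].
  destruct (message_run_tau_star _ _ _ H3) as [[N1 [H5 H6]]|[N1 [N2 [N3 [H5 [H6 [H7 H8]]]]]]].
  - exfalso. eapply (bisimilar_silent_no_output P2 Q2 M2 N1 a PNil); eauto.
  - exists P2, Q2, N1, N2, N3. repeat split; auto.
Qed.

(** * Closed processes and the substitution lemma *)

Fixpoint closed_at (n : nat) (P : proc) : Prop :=
  match P with
  | PIn _ Q => closed_at (S n) Q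
  | POut _ Q => closed_at n Q
  | PPar P Q => closed_at n P /\ closed_at n Q
  | PVar i => i < n
  | PNil => True
  end.

Lemma closed_at_mono P : forall n n', closed_at n P -> n <= n' -> closed_at n' P.
Proof.
  induction P; simpl; intros m m' H Hn; try tauto.
  - eapply IHP; eauto; lia.
  - eapply IHP; eauto.
  - destruct H; split; eauto.
  - lia.
Qed.

Lemma shift_from_closed P : forall n d, closed_at n P -> n <= d -> shift_from d P = P.
Proof.
  induction P; simpl; intros m d H Hd; try (f_equal; eapply IHP; eauto; lia).
  - destruct H; f_equal; eauto.
  - destruct (Nat.leb_spec d n); auto. lia.
  - auto.
Qed.

Lemma shiftn_closed P k : closed_at 0 P -> shiftn k P = P.
Proof. intro H; induction k; simpl; auto. rewrite IHk. eapply shift_from_closed; eauto; lia. Qed.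

Lemma subst_at_closed P : forall n d Q, closed_at n P -> n <= d -> subst_at d Q P = P.
Proof.
  induction P; simpl; intros m d Q H Hd; try (f_equal; eapply IHP; eauto; lia).
  - destruct H; f_equal; eauto.
  - destruct (Nat.compare_spec n d); auto; lia.
  - auto.
Qed.

Lemma num_closed f : closed_at 0 (num f).
Proof. induction f; simpl; auto. eapply closed_at_mono; eauto. Qed.

Lemma closed_Restart : closed_at 0 Restart.
Proof. simpl; repeat split; lia. Qed.

Lemma wf_at_mono t : forall k k', wf_at k t -> k <= k' -> wf_at k' t.
Proof.
  induction t; simpl; intros k0 k' H Hk; try tauto.
  - lia.
  - eapply IHt; eauto; lia.
  - destruct H; split; eauto.
Qed.

Lemma tr_closed t : forall k rho n, wf_at k t -> (forall i, i < k -> rho i < n) ->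
  closed_at n (tr rho t).
Proof.
  induction t; simpl; intros k rho m Hw Hr.
  - eapply closed_at_mono; [apply num_closed|lia].
  - auto.
  - repeat split; try lia;
    first [ eapply closed_at_mono; [apply closed_Restart|lia]
          | eapply IHt; eauto; intros [|i] Hi; [lia|]; specialize (Hr i); lia].
  - destruct Hw; repeat split; try lia.
    + eapply IHt1; eauto. intros i Hi; specialize (Hr i Hi); lia.
    + eapply IHt2; eauto. intros i Hi; specialize (Hr i Hi); lia.
Qed.

Lemma tr_ext_wf t : forall k rho rho', wf_at k t -> (forall i, i < k -> rho i = rho' i) ->
  tr rho t = tr rho' t.
Proof.
  induction t; simpl; intros k rho rho' Hw Hr; auto.
  - erewrite IHt; eauto. intros [|i] Hi; auto. rewrite Hr; auto; lia.
  - destruct Hw. rewrite (IHt1 k (fun i => S (rho i)) (fun i => S (rho' i))); auto.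
    rewrite (IHt2 k (fun i => S (rho i)) (fun i => S (rho' i))); auto.
Qed.

Lemma tr_ext t : forall rho rho', (forall i, rho i = rho' i) -> tr rho t = tr rho' t.
Proof.
  induction t; simpl; intros rho rho' Hr; try (rewrite Hr); auto.
  - erewrite IHt; eauto. intros [|i]; auto.
  - rewrite (IHt1 (fun i => S (rho i)) (fun i => S (rho' i))); auto.
    rewrite (IHt2 (fun i => S (rho i)) (fun i => S (rho' i))); auto.
Qed.

Lemma tr_env_irrelevant t rho : wf_at 0 t -> tr rho t = tr_term t.
Proof. intro H; eapply tr_ext_wf; eauto; intros; lia. Qed.

Lemma tr_term_closed t : wf_at 0 t -> closed_at 0 (tr_term t).
Proof. intro H; eapply tr_closed; eauto; intros; lia. Qed.

Lemma tr_term_subst t d X : wf_at 0 t -> subst_at d X (tr_term t) = tr_term t.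
Proof. intro H; eapply subst_at_closed; [apply tr_term_closed; auto|lia]. Qed.

Lemma tr_term_shift t d : wf_at 0 t -> shift_from d (tr_term t) = tr_term t.
Proof. intro H; eapply shift_from_closed; [apply tr_term_closed; auto|lia]. Qed.

Lemma tr_term_shiftn t k : wf_at 0 t -> shiftn k (tr_term t) = tr_term t.
Proof. intro H; apply shiftn_closed, tr_term_closed; auto. Qed.

Lemma tr_term_flatten t : wf_at 0 t -> flatten (tr_term t) = [tr_term t].
Proof. destruct t; simpl; intros; try lia; try destruct n; reflexivity. Qed.

Definition wf_stack (pi : stack) := Forall (wf_at 0) pi.

Lemma tr_stack_closed pi : wf_stack pi -> closed_at 0 (tr_stack pi).
Proof.
  induction 1; simpl; auto. repeat split; auto. apply tr_term_closed; auto.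
Qed.

Lemma num_subst f d X : subst_at d X (num f) = num f.
Proof. eapply subst_at_closed; [apply num_closed|lia]. Qed.
Lemma num_shift f d : shift_from d (num f) = num f.
Proof. eapply shift_from_closed; [apply num_closed|lia]. Qed.
Lemma num_shiftn f k : shiftn k (num f) = num f.
Proof. apply shiftn_closed, num_closed. Qed.
Lemma stack_subst pi d X : wf_stack pi -> subst_at d X (tr_stack pi) = tr_stack pi.
Proof. intro; eapply subst_at_closed; [apply tr_stack_closed; auto|lia]. Qed.
Lemma Restart_subst d X : subst_at d X Restart = Restart.
Proof. eapply subst_at_closed; [apply closed_Restart|lia]. Qed.

(* [lower d rho] renumbers the process variables once variable [d] is substituted. *)
Definition lower (d : nat) (rho : nat -> nat) (i : nat) : nat :=
  if rho i <=? d then rho i else pred (rho i).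

Lemma tr_subst t : forall rho d j0 s, wf_at 0 s -> (forall i, rho i = d <-> i = j0) ->
  subst_at d (tr_term s) (tr rho t) = tr (lower d rho) (open_at j0 s t).
Proof.
  induction t; intros rho d j0 s Hs Hr; cbn [subst_at tr open_at].
  - apply num_subst.
  - destruct (Nat.eqb_spec n j0).
    + subst. assert (rho j0 = d) as -> by (apply Hr; auto).
      rewrite Nat.compare_refl. rewrite tr_term_shiftn by auto.
      symmetry; apply tr_env_irrelevant; auto.
    + simpl. unfold lower. assert (rho n <> d) by (intro E; apply Hr in E; auto).
      destruct (Nat.compare_spec (rho n) d); destruct (Nat.leb_spec (rho n) d); auto; lia.
  - rewrite Restart_subst. do 5 f_equal.
    rewrite (IHt _ (S (S (S d))) (S j0)); auto.
    + apply tr_ext. intros [|i]; unfold lower; simpl.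
      * destruct (Nat.leb_spec 1 (S (S (S d)))); lia.
      * destruct (Nat.leb_spec (rho i + 3) (S (S (S d)))), (Nat.leb_spec (rho i) d); lia.
    + intros [|i]; split; intro E; try lia.
      * f_equal. apply Hr. lia.
      * injection E as E. apply Hr in E. lia.
  - f_equal. f_equal.
    + rewrite (IHt1 _ (S d) j0); auto.
      * apply tr_ext. intros i; unfold lower.
        destruct (Nat.leb_spec (S (rho i)) (S d)), (Nat.leb_spec (rho i) d); lia.
      * intros i; rewrite <- Hr; lia.
    + do 3 f_equal. rewrite (IHt2 _ (S d) j0); auto.
      * apply tr_ext. intros i; unfold lower.
        destruct (Nat.leb_spec (S (rho i)) (S d)), (Nat.leb_spec (rho i) d); lia.
      * intros i; rewrite <- Hr; lia.
Qed.

Lemma wf_open t : forall k s, wf_at (S k) t -> wf_at 0 s -> wf_at k (open_at k s t).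
Proof.
  induction t; simpl; intros k s Ht Hs; auto.
  - destruct (Nat.eqb_spec n k); simpl; [eapply wf_at_mono; eauto; lia|lia].
  - intuition.
Qed.

Definition rho_lam (rho : nat -> nat) (i : nat) : nat :=
  match i with 0 => 1 | S j => rho j + 3 end.

Lemma tr_body_subst t s : wf_at 1 t -> wf_at 0 s ->
  subst_at 1 (tr_term s) (tr (rho_lam (fun i => i)) t) = tr_term (open t s).
Proof.
  intros Ht Hs. rewrite (tr_subst _ _ 1 0); auto.
  - apply tr_env_irrelevant. apply wf_open; auto.
  - intros [|i]; simpl; lia.
Qed.

(** * The Krivine machine *)

Lemma kam_det c c1 c2 : kam_step c c1 -> kam_step c c2 -> c1 = c2.
Proof. intros H1 H2; inversion H1; subst; inversion H2; subst; auto. Qed.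

Definition terminal (c : term * stack) := forall c', ~ kam_step c c'.

Lemma terminal_lam t : terminal (Lam t, []).
Proof. intros c H; inversion H. Qed.
Lemma terminal_fvar f pi : terminal (FVar f, pi).
Proof. intros c H; inversion H. Qed.

Lemma kam_star_to_terminal c c1 c2 :
  kam_star c c1 -> kam_star c c2 -> terminal c2 -> kam_star c1 c2.
Proof.
  intros H1 H2 Ht. apply clos_rt_rt1n in H1. revert H2. induction H1; intros H2; auto.
  apply clos_rt_rt1n in H2. inversion H2; subst.
  - exfalso; eapply Ht; eauto.
  - apply IHclos_refl_trans_1n. rewrite (kam_det _ _ _ H H0). apply clos_rt1n_rt; auto.
Qed.

Lemma terminal_star c c' : kam_star c c' -> terminal c -> c = c'.
Proof.
  intros H Ht. apply clos_rt_rt1n in H. inversion H; subst; auto. exfalso; eapply Ht; eauto.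
Qed.

Definition wf_conf (c : term * stack) := wf_at 0 (fst c) /\ wf_stack (snd c).

Lemma kam_step_wf c c' : kam_step c c' -> wf_conf c -> wf_conf c'.
Proof.
  intros H [H1 H2]; inversion H; subst; simpl in *.
  - destruct H1; split; auto. constructor; auto.
  - inversion H2; subst. split; auto. apply wf_open; auto.
Qed.

Lemma kam_star_wf c c' : kam_star c c' -> wf_conf c -> wf_conf c'.
Proof. induction 1; auto. apply kam_step_wf; auto. Qed.

Definition fv_conf (c : term * stack) := fv (fst c) ++ flat_map fv (snd c).

Lemma fv_open t : forall k u, incl (fv (open_at k u t)) (fv t ++ fv u).
Proof.
  induction t; simpl; intros k u x Hx.
  - destruct Hx as [<-|[]]; left; reflexivity.
  - destruct (n =? k); simpl in Hx; [auto|destruct Hx].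
  - apply IHt in Hx; auto.
  - rewrite !in_app_iff in *. destruct Hx as [Hx|Hx]; [apply IHt1 in Hx|apply IHt2 in Hx];
      rewrite in_app_iff in *; tauto.
Qed.

Lemma kam_step_fv c c' : kam_step c c' -> incl (fv_conf c') (fv_conf c).
Proof.
  intros H; inversion H; subst; unfold fv_conf; simpl; intros x Hx.
  - rewrite <- app_assoc. auto.
  - rewrite !in_app_iff in *. destruct Hx as [Hx|Hx]; [apply fv_open in Hx|];
    rewrite ?in_app_iff in *; tauto.
Qed.

Lemma kam_star_fv c c' : kam_star c c' -> incl (fv_conf c') (fv_conf c).
Proof. induction 1. apply kam_step_fv; auto. apply incl_refl. eapply incl_tran; eauto. Qed.

Lemma kam_star_wf_init t t1 pi1 : wf_at 0 t -> kam_star (t, []) (t1, pi1) ->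
  wf_at 0 t1 /\ wf_stack pi1.
Proof. intros W H. apply kam_star_wf in H; [exact H|split; simpl; auto; constructor]. Qed.

Lemma kam_star_snoc c c1 c2 : kam_star c c1 -> kam_step c1 c2 -> kam_star c c2.
Proof. intros; eapply rt_trans; eauto; apply rt_step; auto. Qed.

Fixpoint ren (g : nat -> nat) (t : term) : term :=
  match t with
  | FVar f => FVar (g f)
  | BVar i => BVar i
  | Lam t => Lam (ren g t)
  | App t s => App (ren g t) (ren g s)
  end.

Lemma ren_open g t : forall k u, ren g (open_at k u t) = open_at k (ren g u) (ren g t).
Proof. induction t; intros k u; simpl; auto; try (destruct (n =? k); auto); f_equal; auto. Qed.

Lemma ren_comp g h t : ren g (ren h t) = ren (fun x => g (h x)) t.
Proof. induction t; simpl; f_equal; auto. Qed.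

Lemma ren_ext g h t : (forall x, In x (fv t) -> g x = h x) -> ren g t = ren h t.
Proof.
  induction t; simpl; intros H; f_equal; auto.
  - apply IHt1; intros; apply H, in_or_app; auto.
  - apply IHt2; intros; apply H, in_or_app; auto.
Qed.

Lemma ren_id t : ren (fun x => x) t = t.
Proof. induction t; simpl; f_equal; auto. Qed.

Lemma fv_ren g t : fv (ren g t) = map g (fv t).
Proof. induction t; simpl; auto. rewrite map_app; f_equal; auto. Qed.

Lemma kam_step_ren g c c' : kam_step c c' ->
  kam_step (ren g (fst c), map (ren g) (snd c)) (ren g (fst c'), map (ren g) (snd c')).
Proof.
  intros H; inversion H; subst; simpl.
  - constructor.
  - unfold open. rewrite ren_open. constructor.
Qed.

Lemma kam_star_ren g c c' : kam_star c c' ->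
  kam_star (ren g (fst c), map (ren g) (snd c)) (ren g (fst c'), map (ren g) (snd c')).
Proof.
  induction 1.
  - apply rt_step, kam_step_ren; auto.
  - apply rt_refl.
  - eapply rt_trans; eauto.
Qed.

Lemma ren_inv g g' t : (forall x, g' (g x) = x) -> ren g' (ren g t) = t.
Proof. intros H. rewrite ren_comp. rewrite <- (ren_id t) at 2. apply ren_ext; auto. Qed.

Definition swap (f h x : nat) := if x =? f then h else if x =? h then f else x.

Lemma swap_involutive f h x : swap f h (swap f h x) = x.
Proof.
  unfold swap. destruct (Nat.eqb_spec x f) as [E|E];
  [|destruct (Nat.eqb_spec x h) as [E'|E']];
  repeat match goal with
  | |- context [?a =? ?b] =>
      match a with context [if _ then _ else _] => fail 1 | _ => destruct (Nat.eqb_spec a b) end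
  end;
  lia.
Qed.

Lemma swap_other f h x : x <> f -> x <> h -> swap f h x = x.
Proof.
  intros H1 H2. unfold swap. destruct (Nat.eqb_spec x f); [lia|].
  destruct (Nat.eqb_spec x h); [lia|auto].
Qed.

Lemma swap_r f h : swap f h h = f.
Proof. unfold swap. destruct (Nat.eqb_spec h f); auto. rewrite Nat.eqb_refl; auto. Qed.

Lemma ren_swap_fresh f h t : ~ In f (fv t) -> ~ In h (fv t) -> ren (swap f h) t = t.
Proof.
  intros H1 H2. rewrite <- (ren_id t) at 2. apply ren_ext. intros x Hx.
  apply swap_other; intro E; subst; auto.
Qed.

Definition fv_below (l : list nat) (m : nat) := forall f, In f l -> f < m.

Lemma fv_below_app l1 l2 m : fv_below l1 m -> fv_below l2 m -> fv_below (l1 ++ l2) m.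
Proof. intros H1 H2 f Hf; apply in_app_or in Hf as [?|?]; auto. Qed.

Lemma fv_below_app_l l1 l2 m : fv_below (l1 ++ l2) m -> fv_below l1 m.
Proof. intros H f Hf; apply H, in_or_app; auto. Qed.

Lemma fv_below_app_r l1 l2 m : fv_below (l1 ++ l2) m -> fv_below l2 m.
Proof. intros H f Hf; apply H, in_or_app; auto. Qed.

Lemma fv_below_app_comm l1 l2 m : fv_below (l1 ++ l2) m -> fv_below (l2 ++ l1) m.
Proof. intros H; apply fv_below_app; [eapply fv_below_app_r|eapply fv_below_app_l]; eauto. Qed.

Lemma fv_below_incl l1 l2 m : incl l1 l2 -> fv_below l2 m -> fv_below l1 m.
Proof. intros H1 H2 f Hf. apply H2, H1, Hf. Qed.

Lemma fv_below_notin l m : fv_below l m -> ~ In m l.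
Proof. intros H Hm. apply H in Hm. lia. Qed.

Lemma fv_below_open_fresh u m : fv_below (fv u) m -> fv_below (fv (open u (FVar m))) (S m).
Proof.
  intros Hu g Hg. apply fv_open in Hg.
  apply in_app_or in Hg as [Hg|[<-|[]]]; [apply Hu in Hg|]; lia.
Qed.

Lemma fv_below_kam_star_lam t u m :
  kam_star (t, []) (Lam u, []) -> fv_below (fv t) m -> fv_below (fv u) m.
Proof.
  intros Hk F f Hf. apply F.
  pose proof (kam_star_fv _ _ Hk f) as Hi; unfold fv_conf in Hi; simpl in Hi.
  rewrite !app_nil_r in Hi. auto.
Qed.

Lemma fv_below_kam_star_fvar t f pi m :
  kam_star (t, []) (FVar f, pi) -> fv_below (fv t) m -> fv_below (flat_map fv pi) m.
Proof.
  intros Hk F g Hg. apply F.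
  pose proof (kam_star_fv _ _ Hk g) as Hi; unfold fv_conf in Hi; simpl in Hi.
  rewrite app_nil_r in Hi. auto.
Qed.

Lemma fv_below_list_max l : fv_below l (S (list_max l)).
Proof.
  intros f Hf. pose proof (proj1 (list_max_le l (list_max l)) (le_n _)) as Hmax.
  rewrite Forall_forall in Hmax. specialize (Hmax f Hf). lia.
Qed.

(** * The soups of an encoded run *)

(* [ev_soup t pi m] is the soup of [[<t, pi, m>_ev]] ([bg_soup m] holds the
   counter of fresh variables and the recursion machinery).  The numbered
   soups list, in order, the states visited between two evaluation states:
   [beta_soup] for a beta-reduction, [restart_soup] for the restart of a
   lambda in empty context on the fresh variable [m], [cont_soup] for the
   unstacking of the arguments of a free variable; at [cont_soup5] the
   internal choice between entering the head argument ([enter_soup]) and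
   skipping it ([skip_soup]) takes place. *)

Definition bg_soup m := [POut n_k (num m); Rec; POut n_rec Rec].
Definition ev_soup t pi m := tr_term t :: POut n_c (tr_stack pi) :: bg_soup m.

Definition lam_body t := tr (rho_lam (fun i => i)) t.
Definition lam_wait t := PIn n_hd (PIn n_b (lam_body t)).
Definition beta_soup1 u s pi m :=
  POut n_hd (tr_term s) :: POut n_c (tr_stack pi) :: POut n_b Restart :: lam_wait u :: bg_soup m.
Definition beta_soup2 u s pi m :=
  POut n_c (tr_stack pi) :: POut n_b Restart :: PIn n_b (tr_term (open u s)) :: bg_soup m.

Definition restart_body :=
  PIn n_k (PPar (POut n_hd (PVar 0)) (PPar (POut n_k (PIn n_suc (PVar 1)))
    (PPar (POut n_c stack_nil) (POut n_b PNil)))).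
Definition restart_soup1 u m := stack_nil :: POut n_b Restart :: lam_wait u :: bg_soup m.
Definition restart_soup2 u m := Restart :: lam_wait u :: bg_soup m.
Definition restart_soup3 u m := restart_body :: lam_wait u :: bg_soup m.
Definition restart_soup4 u m :=
  [POut n_hd (num m); POut n_k (num (S m)); POut n_c (tr_stack []); POut n_b PNil;
   lam_wait u; Rec; POut n_rec Rec].
Definition restart_soup5 u m :=
  [PIn n_b (tr_term (open u (FVar m))); POut n_k (num (S m)); POut n_c (tr_stack []);
   POut n_b PNil; Rec; POut n_rec Rec].

Definition rec_body := PIn n_rec (PPar (PVar 0) (PPar (POut n_rec (PVar 0)) Cont)).
Definition done_flag := PIn n_done PNil.
Definition cont_wait := PIn n_hd (PIn n_b (Choice (PVar 1))).
Definition enter_branch T := PIn n_enter (PIn n_c (PPar T (POut n_c stack_nil))).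
Definition skip_branch := PIn n_skip (POut n_init PNil).
Definition choice_reader := PIn n_ch (PIn n_ch (PVar 1)).

Definition cont_soup0 pi m := POut n_init PNil :: POut n_c (tr_stack pi) :: bg_soup m.
Definition cont_soup1 pi m := [rec_body; POut n_c (tr_stack pi); POut n_k (num m); POut n_rec Rec].
Definition cont_soup2 pi m := Cont :: POut n_c (tr_stack pi) :: bg_soup m.
Definition cont_soup3 pi m :=
  match pi with
  | [] => stack_nil :: POut n_b done_flag :: cont_wait :: bg_soup m
  | t :: p =>
      POut n_hd (tr_term t) :: POut n_c (tr_stack p) :: POut n_b done_flag :: cont_wait :: bg_soup m
  end.
Definition done_soup m := done_flag :: cont_wait :: bg_soup m.
Definition inert_soup m := cont_wait :: bg_soup m.
Definition cont_soup4 t p m :=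
  PIn n_b (psum (enter_branch (tr_term t)) skip_branch) :: POut n_c (tr_stack p) ::
  POut n_b done_flag :: bg_soup m.
Definition cont_soup5 t p m :=
  POut n_ch (enter_branch (tr_term t)) :: POut n_ch skip_branch :: choice_reader ::
  POut n_c (tr_stack p) :: bg_soup m.

Definition enter_soup1 t p m :=
  POut n_ch skip_branch :: PIn n_ch (enter_branch (tr_term t)) :: POut n_c (tr_stack p) ::
  bg_soup m.
Definition enter_soup2 t p m := enter_branch (tr_term t) :: POut n_c (tr_stack p) :: bg_soup m.
Definition enter_soup3 t p m :=
  PIn n_c (PPar (tr_term t) (POut n_c stack_nil)) :: POut n_c (tr_stack p) :: bg_soup m.
Definition skip_soup1 t p m :=
  POut n_ch (enter_branch (tr_term t)) :: PIn n_ch skip_branch :: POut n_c (tr_stack p) ::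
  bg_soup m.
Definition skip_soup2 p m := skip_branch :: POut n_c (tr_stack p) :: bg_soup m.

(* Labels that no context avoiding H can synchronise with: inputs on H, and
   outputs (which the soups below only perform on H). *)
Definition H_label (l : label) :=
  match l with LTau => False | LIn a _ => In a H_names | LOut _ _ => True end.

Ltac unfold_states :=
  unfold ev_soup, beta_soup1, beta_soup2, restart_soup1, restart_soup2, restart_soup3,
    restart_soup4, restart_soup5, cont_soup0, cont_soup1, cont_soup2, cont_soup3, done_soup,
    inert_soup, cont_soup4, cont_soup5, enter_soup1, skip_soup1, enter_soup2, skip_soup2,
    enter_soup3 in *; unfold bg_soup in *.

Ltac destruct_ors H := repeat match type of H with _ \/ _ => destruct H as [H|H] end;
  try contradiction.

Ltac solve_H_label := left; simpl; unfold H_names, n_c, n_hd, n_b, n_k, n_init, n_rec, n_ch;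
  simpl; tauto.

Ltac hnf_lhs H := let T := type of H in
  match T with ?c = ?d => let c' := eval hnf in c in change (c' = d) in H end.

Ltac invert_soup_step l H :=
  let a := fresh "a" in let X := fresh "X" in
  destruct l as [a X|a X|];
  [ let B := fresh "B" in let r := fresh "r" in let Hp := fresh "Hp" in let Hi := fresh "Hi" in
    apply soup_step_in_inv in H as [B [r [Hp ->]]];
    pose proof (Permutation_in _ (Permutation_sym Hp) (in_eq _ _)) as Hi;
    unfold_states; cbn [In app] in Hi; destruct_ors Hi;
    try discriminate Hi; hnf_lhs Hi; injection Hi as <- <-; try solve_H_label
  | left; exact I
  | let B := fresh "B" in let r := fresh "r" in let Hp := fresh "Hp" in
    let Hi := fresh "Hi" in let Hj := fresh "Hj" in
    apply soup_step_tau_inv in H as [a [X [B [r [Hp ->]]]]];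
    pose proof (Permutation_in _ (Permutation_sym Hp) (in_eq _ _)) as Hi;
    pose proof (Permutation_in _ (Permutation_sym Hp) (in_cons _ _ _ (in_eq _ _))) as Hj;
    unfold_states; cbn [In app] in Hi, Hj; destruct_ors Hi; try discriminate Hi;
    hnf_lhs Hi; injection Hi as <- <-; destruct_ors Hj; try discriminate Hj; hnf_lhs Hj;
    injection Hj as <-;
    try discriminate ].

Lemma closed_Rec : closed_at 0 Rec. Proof. simpl; repeat split; lia. Qed.
Lemma closed_restart_body : closed_at 0 restart_body. Proof. simpl; repeat split; lia. Qed.
Lemma closed_rec_body : closed_at 0 rec_body. Proof. simpl; repeat split; lia. Qed.
Lemma closed_Cont : closed_at 0 Cont. Proof. simpl; repeat split; lia. Qed.
Lemma closed_cont_wait : closed_at 0 cont_wait. Proof. simpl; repeat split; lia. Qed.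
Lemma closed_done_flag : closed_at 0 done_flag. Proof. simpl; repeat split; lia. Qed.
Lemma closed_skip_branch : closed_at 0 skip_branch. Proof. simpl; repeat split; lia. Qed.
Lemma closed_choice_reader : closed_at 0 choice_reader. Proof. simpl; repeat split; lia. Qed.
Lemma closed_stack_nil : closed_at 0 stack_nil. Proof. simpl; repeat split; lia. Qed.
Lemma closed_lam_wait u : wf_at 1 u -> closed_at 0 (lam_wait u).
Proof. intros W. simpl. eapply tr_closed; eauto. intros [|i] Hi; simpl; lia. Qed.
Lemma closed_enter_branch t : wf_at 0 t -> closed_at 0 (enter_branch (tr_term t)).
Proof.
  intros W. simpl. repeat split; try lia. eapply closed_at_mono; [apply tr_term_closed; auto|lia].
Qed.

Lemma subst_at_closed0 P d X : closed_at 0 P -> subst_at d X P = P.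
Proof. intros; eapply subst_at_closed; eauto; lia. Qed.

Lemma tr_lam_eq u :
  tr_term (Lam u) = PIn n_c (PPar (PVar 0) (PPar (POut n_b Restart) (lam_wait u))).
Proof. reflexivity. Qed.

Lemma choice_subst2 X : subst_at 2 X (Choice (PVar 1)) = Choice (PVar 1).
Proof. apply (subst_at_closed _ 2); [simpl; repeat split; lia|lia]. Qed.
Lemma choice_subst1 t : wf_at 0 t ->
  subst_at 1 (tr_term t) (Choice (PVar 1)) = psum (enter_branch (tr_term t)) skip_branch.
Proof. intros W. unfold Choice, psum; cbn. rewrite !tr_term_shift by auto. reflexivity. Qed.
Lemma closed_psum t : wf_at 0 t -> closed_at 0 (psum (enter_branch (tr_term t)) skip_branch).
Proof.
  intros W. simpl. repeat split; try lia. eapply closed_at_mono; [apply tr_term_closed; auto|lia].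
Qed.
Lemma lam_body_subst u s : wf_at 1 u -> wf_at 0 s ->
  subst_at 1 (tr_term s) (lam_body u) = tr_term (open u s).
Proof. apply tr_body_subst. Qed.
Lemma lam_body_subst_num u m : wf_at 1 u ->
  subst_at 1 (num m) (lam_body u) = tr_term (open u (FVar m)).
Proof. intros W. change (num m) with (tr_term (FVar m)). apply tr_body_subst; simpl; auto. Qed.

Lemma shift_from_closed0 P d : closed_at 0 P -> shift_from d P = P.
Proof. intros; eapply shift_from_closed; eauto; lia. Qed.

Ltac simpl_closed :=
  repeat first
  [ rewrite (shift_from_closed0 (enter_branch _)) by (apply closed_enter_branch; assumption)
  | rewrite (shift_from_closed0 skip_branch) by apply closed_skip_branch
  | rewrite (shift_from_closed0 Rec) by apply closed_Rec
  | rewrite (shift_from_closed0 Restart) by apply closed_Restart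
  | rewrite (shift_from_closed0 done_flag) by apply closed_done_flag
  | rewrite choice_subst2
  | rewrite choice_subst1 by assumption
  | rewrite (subst_at_closed0 (psum _ _)) by (apply closed_psum; assumption)
  | rewrite lam_body_subst by assumption
  | rewrite lam_body_subst_num by assumption
  | rewrite (subst_at_closed0 Rec) by apply closed_Rec
  | rewrite (subst_at_closed0 restart_body) by apply closed_restart_body
  | rewrite (subst_at_closed0 rec_body) by apply closed_rec_body
  | rewrite (subst_at_closed0 Cont) by apply closed_Cont
  | rewrite (subst_at_closed0 cont_wait) by apply closed_cont_wait
  | rewrite (subst_at_closed0 done_flag) by apply closed_done_flag
  | rewrite (subst_at_closed0 skip_branch) by apply closed_skip_branch
  | rewrite (subst_at_closed0 choice_reader) by apply closed_choice_reader
  | rewrite (subst_at_closed0 stack_nil) by apply closed_stack_nil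
  | rewrite (subst_at_closed0 (lam_wait _)) by (apply closed_lam_wait; assumption)
  | rewrite (subst_at_closed0 (enter_branch _)) by (apply closed_enter_branch; assumption)
  | rewrite (shiftn_closed Rec) by apply closed_Rec
  | rewrite (shiftn_closed Restart) by apply closed_Restart
  | rewrite (shiftn_closed (enter_branch _)) by (apply closed_enter_branch; assumption)
  | rewrite (shiftn_closed stack_nil) by apply closed_stack_nil
  | rewrite (shiftn_closed done_flag) by apply closed_done_flag
  | rewrite (shiftn_closed skip_branch) by apply closed_skip_branch
  | rewrite num_shiftn | rewrite num_shift | rewrite tr_term_shift by assumption
  | rewrite tr_term_shiftn by assumption
  | rewrite tr_term_subst by assumption | rewrite num_subst | rewrite stack_subst by assumption
  | rewrite Restart_subst ].

Lemma flatten_Rec : flatten Rec = [Rec]. Proof. reflexivity. Qed.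
Lemma flatten_Restart : flatten Restart = [Restart]. Proof. reflexivity. Qed.
Lemma flatten_Cont : flatten Cont = [Cont]. Proof. reflexivity. Qed.
Lemma flatten_done_flag : flatten done_flag = [done_flag]. Proof. reflexivity. Qed.
Lemma flatten_stack_nil : flatten stack_nil = [stack_nil]. Proof. reflexivity. Qed.
Lemma flatten_lam_wait u : flatten (lam_wait u) = [lam_wait u]. Proof. reflexivity. Qed.
Lemma flatten_enter_branch T : flatten (enter_branch T) = [enter_branch T]. Proof. reflexivity. Qed.
Lemma flatten_skip_branch : flatten skip_branch = [skip_branch]. Proof. reflexivity. Qed.
Lemma flatten_restart_body : flatten restart_body = [restart_body]. Proof. reflexivity. Qed.
Lemma flatten_rec_body : flatten rec_body = [rec_body]. Proof. reflexivity. Qed.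
Lemma flatten_cont_wait : flatten cont_wait = [cont_wait]. Proof. reflexivity. Qed.
Lemma flatten_choice_reader : flatten choice_reader = [choice_reader]. Proof. reflexivity. Qed.
Lemma flatten_psum A B : flatten (psum A B) = [POut n_ch A; POut n_ch B; choice_reader].
Proof. reflexivity. Qed.
Lemma flatten_num f : flatten (num f) = [num f]. Proof. destruct f; reflexivity. Qed.

Ltac simpl_flatten :=
  repeat first
  [ rewrite flatten_Rec | rewrite flatten_Restart | rewrite flatten_Cont
  | rewrite flatten_done_flag | rewrite flatten_stack_nil | rewrite flatten_lam_wait
  | rewrite flatten_enter_branch | rewrite flatten_skip_branch | rewrite flatten_restart_body
  | rewrite flatten_rec_body | rewrite flatten_num | rewrite flatten_psum
  | rewrite flatten_cont_wait | rewrite flatten_choice_reader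
  | rewrite tr_term_flatten by assumption ].

Ltac fold_atoms :=
  fold done_flag cont_wait rec_body restart_body skip_branch choice_reader stack_nil in *;
  try change (PIn n_lambda restart_body) with Restart in *;
  try change (PIn n_init rec_body) with Rec in *;
  try change (PIn n_c (PPar (PVar 0) (PPar (POut n_b done_flag) cont_wait))) with Cont in *;
  repeat (change (PIn n_hd (PIn n_b (lam_body ?x))) with (lam_wait x) in * );
  repeat (change (PIn n_enter (PIn n_c (PPar ?x (POut n_c stack_nil)))) with (enter_branch x)
            in * ).

Ltac compute_residual :=
  unfold_states; cbn [tr_term tr tr_stack num] in *;
  unfold psubst; cbn [subst_at flatten shiftn app Nat.compare tr_stack num];
  simpl_closed; cbn [subst_at flatten shiftn app Nat.compare tr_stack num]; simpl_flatten;
  cbn [subst_at flatten shiftn app Nat.compare tr_stack num];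
  fold_atoms.

Ltac finish_inv := right; (split; [reflexivity|]); compute_residual; solve_perm.
Ltac finish_inv_in := right; eexists; (split; [reflexivity|]); compute_residual; solve_perm.

Ltac finish_move := compute_residual; solve_perm.

Ltac tau_by a X B r :=
  apply (soup_tau_intro _ a X B r);
  [unfold_states; cbn [tr_term tr tr_stack num]; fold_atoms; solve_perm|].

Ltac input_by a B r :=
  apply (soup_in_intro _ a B r);
  [unfold_states; cbn [tr_term tr tr_stack num]; fold_atoms; solve_perm|].

Lemma ev_app_inv t1 t2 pi m l S : wf_at 0 t1 -> wf_at 0 t2 -> wf_stack pi ->
  soup_step (ev_soup (App t1 t2) pi m) l S ->
  H_label l \/ (l = LTau /\ Permutation S (ev_soup t1 (t2 :: pi) m)).
Proof.
  intros W1 W2 W3 H. invert_soup_step l H.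
  rewrite (tr_env_irrelevant t1), (tr_env_irrelevant t2) by auto. finish_inv.
Qed.

Lemma ev_app_tau t1 t2 pi m : wf_at 0 t1 -> wf_at 0 t2 -> wf_stack pi ->
  soup_tau (ev_soup (App t1 t2) pi m) (ev_soup t1 (t2 :: pi) m).
Proof.
  intros W1 W2 W3.
  tau_by n_c (tr_stack pi) (PPar (tr (fun i => S i) t1)
               (POut n_c (PPar (POut n_hd (tr (fun i => S i) t2)) (POut n_c (PVar 0)))))
         (bg_soup m).
  unfold_states. rewrite (tr_env_irrelevant t1), (tr_env_irrelevant t2) by auto. finish_move.
Qed.

Lemma ev_lam_cons_inv u s p m l S : wf_at 1 u -> wf_at 0 s -> wf_stack p ->
  soup_step (ev_soup (Lam u) (s :: p) m) l S ->
  H_label l \/ (l = LTau /\ Permutation S (beta_soup1 u s p m)).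
Proof.
  intros W1 W2 W3 H. unfold ev_soup in H; rewrite tr_lam_eq in H. invert_soup_step l H. finish_inv.
Qed.

Lemma ev_lam_cons_tau u s p m : wf_at 1 u -> wf_at 0 s -> wf_stack p ->
  soup_tau (ev_soup (Lam u) (s :: p) m) (beta_soup1 u s p m).
Proof.
  intros W1 W2 W3. unfold ev_soup; rewrite tr_lam_eq.
  tau_by n_c (tr_stack (s :: p)) (PPar (PVar 0) (PPar (POut n_b Restart) (lam_wait u))) (bg_soup m).
  unfold_states. finish_move.
Qed.

Lemma beta_soup1_inv u s p m l S : wf_at 1 u -> wf_at 0 s -> wf_stack p ->
  soup_step (beta_soup1 u s p m) l S ->
  H_label l \/ (l = LTau /\ Permutation S (beta_soup2 u s p m)).
Proof. intros W1 W2 W3 H. invert_soup_step l H. finish_inv. Qed.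

Lemma beta_soup1_tau u s p m : wf_at 1 u -> wf_at 0 s -> wf_stack p ->
  soup_tau (beta_soup1 u s p m) (beta_soup2 u s p m).
Proof.
  intros W1 W2 W3.
  tau_by n_hd (tr_term s) (PIn n_b (lam_body u)) (POut n_c (tr_stack p) :: POut n_b Restart ::
    bg_soup m).
  finish_move.
Qed.

Lemma beta_soup2_inv u s p m l S : wf_at 1 u -> wf_at 0 s -> wf_stack p ->
  soup_step (beta_soup2 u s p m) l S ->
  H_label l \/ (l = LTau /\ Permutation S (ev_soup (open u s) p m)).
Proof.
  intros W1 W2 W3 H. assert (W4 : wf_at 0 (open u s)) by (apply wf_open; auto).
  invert_soup_step l H. finish_inv.
Qed.

Lemma beta_soup2_tau u s p m : wf_at 1 u -> wf_at 0 s -> wf_stack p ->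
  soup_tau (beta_soup2 u s p m) (ev_soup (open u s) p m).
Proof.
  intros W1 W2 W3. assert (W4 : wf_at 0 (open u s)) by (apply wf_open; auto).
  tau_by n_b Restart (tr_term (open u s)) (POut n_c (tr_stack p) :: bg_soup m).
  finish_move.
Qed.

Lemma ev_lam_nil_inv u m l S : wf_at 1 u ->
  soup_step (ev_soup (Lam u) [] m) l S ->
  H_label l \/ (l = LTau /\ Permutation S (restart_soup1 u m)).
Proof.
  intros W1 H. unfold ev_soup in H; rewrite tr_lam_eq in H. invert_soup_step l H. finish_inv.
Qed.

Lemma ev_lam_nil_tau u m : wf_at 1 u -> soup_tau (ev_soup (Lam u) [] m) (restart_soup1 u m).
Proof.
  intros W1. unfold ev_soup; rewrite tr_lam_eq.
  tau_by n_c (tr_stack []) (PPar (PVar 0) (PPar (POut n_b Restart) (lam_wait u))) (bg_soup m).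
  finish_move.
Qed.

Lemma restart_soup1_inv u m l S : wf_at 1 u ->
  soup_step (restart_soup1 u m) l S -> H_label l \/ (l = LTau /\ Permutation S (restart_soup2 u m)).
Proof. intros W1 H. invert_soup_step l H. finish_inv. Qed.

Lemma restart_soup1_tau u m : wf_at 1 u -> soup_tau (restart_soup1 u m) (restart_soup2 u m).
Proof.
  intros W1. tau_by n_b Restart (PVar 0) (lam_wait u :: bg_soup m). finish_move.
Qed.

Lemma restart_soup2_inv u m l S : wf_at 1 u ->
  soup_step (restart_soup2 u m) l S ->
  H_label l \/ (exists Q, l = LIn n_lambda Q /\ Permutation S (restart_soup3 u m)).
Proof. intros W1 H. invert_soup_step l H. finish_inv_in. Qed.

Lemma restart_soup2_in u m X : wf_at 1 u ->
  exists N2,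
    soup_step (restart_soup2 u m) (LIn n_lambda X) N2 /\ Permutation N2 (restart_soup3 u m).
Proof. intros W1. input_by n_lambda restart_body (lam_wait u :: bg_soup m). finish_move. Qed.

Lemma restart_soup3_inv u m l S : wf_at 1 u ->
  soup_step (restart_soup3 u m) l S -> H_label l \/ (l = LTau /\ Permutation S (restart_soup4 u m)).
Proof. intros W1 H. invert_soup_step l H. finish_inv. Qed.

Lemma restart_soup3_tau u m : wf_at 1 u -> soup_tau (restart_soup3 u m) (restart_soup4 u m).
Proof.
  intros W1.
  tau_by n_k (num m)
    (PPar (POut n_hd (PVar 0)) (PPar (POut n_k (PIn n_suc (PVar 1)))
      (PPar (POut n_c stack_nil) (POut n_b PNil))))
    [lam_wait u; Rec; POut n_rec Rec].
  finish_move.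
Qed.

Lemma restart_soup4_inv u m l S : wf_at 1 u ->
  soup_step (restart_soup4 u m) l S -> H_label l \/ (l = LTau /\ Permutation S (restart_soup5 u m)).
Proof. intros W1 H. invert_soup_step l H. finish_inv. Qed.

Lemma restart_soup4_tau u m : wf_at 1 u -> soup_tau (restart_soup4 u m) (restart_soup5 u m).
Proof.
  intros W1. tau_by n_hd (num m) (PIn n_b (lam_body u))
   [POut n_k (num (S m)); POut n_c (tr_stack []); POut n_b PNil; Rec; POut n_rec Rec]. finish_move.
Qed.

Lemma restart_soup5_inv u m l Z : wf_at 1 u ->
  soup_step (restart_soup5 u m) l Z ->
  H_label l \/ (l = LTau /\ Permutation Z (ev_soup (open u (FVar m)) [] (S m))).
Proof.
  intros W1 H. assert (W4 : wf_at 0 (open u (FVar m))) by (apply wf_open; simpl; auto).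
  invert_soup_step l H. finish_inv.
Qed.

Lemma restart_soup5_tau u m : wf_at 1 u ->
  soup_tau (restart_soup5 u m) (ev_soup (open u (FVar m)) [] (S m)).
Proof.
  intros W1. assert (W4 : wf_at 0 (open u (FVar m))) by (apply wf_open; simpl; auto).
  tau_by n_b PNil (tr_term (open u (FVar m)))
   [POut n_k (num (S m)); POut n_c (tr_stack []); Rec; POut n_rec Rec]. finish_move.
Qed.

Lemma ev_fvar_inv f pi m l Z : wf_stack pi ->
  soup_step (ev_soup (FVar f) pi m) l Z ->
  H_label l \/
  (exists Q f', f = S f' /\ l = LIn n_suc Q /\ Permutation Z (ev_soup (FVar f') pi m)) \/
  (exists Q, f = 0 /\ l = LIn n_z Q /\ Permutation Z (cont_soup0 pi m)).
Proof.
  intros W H. destruct f as [|f].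
  - invert_soup_step l H.
    right; right; eexists; (split; [reflexivity|]); (split; [reflexivity|]); compute_residual;
      solve_perm.
  - invert_soup_step l H.
    right; left; do 2 eexists; (split; [reflexivity|]); (split; [reflexivity|]); compute_residual;
      solve_perm.
Qed.

Lemma ev_suc_in f pi m X : wf_stack pi ->
  exists N2,
    soup_step (ev_soup (FVar (S f)) pi m) (LIn n_suc X) N2 /\
      Permutation N2 (ev_soup (FVar f) pi m).
Proof. intros W. input_by n_suc (num f) (POut n_c (tr_stack pi) :: bg_soup m). finish_move. Qed.

Lemma ev_zero_in pi m X : wf_stack pi ->
  exists N2, soup_step (ev_soup (FVar 0) pi m) (LIn n_z X) N2 /\ Permutation N2 (cont_soup0 pi m).
Proof.
  intros W. input_by n_z (POut n_init PNil) (POut n_c (tr_stack pi) :: bg_soup m). finish_move.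
Qed.

Lemma cont_soup0_inv pi m l S : wf_stack pi ->
  soup_step (cont_soup0 pi m) l S -> H_label l \/ (l = LTau /\ Permutation S (cont_soup1 pi m)).
Proof. intros W H. invert_soup_step l H. finish_inv. Qed.

Lemma cont_soup0_tau pi m : wf_stack pi -> soup_tau (cont_soup0 pi m) (cont_soup1 pi m).
Proof.
  intros W.
  tau_by n_init PNil rec_body [POut n_c (tr_stack pi); POut n_k (num m); POut n_rec Rec].
  finish_move.
Qed.

Lemma cont_soup1_inv pi m l S : wf_stack pi ->
  soup_step (cont_soup1 pi m) l S -> H_label l \/ (l = LTau /\ Permutation S (cont_soup2 pi m)).
Proof. intros W H. invert_soup_step l H. finish_inv. Qed.

Lemma cont_soup1_tau pi m : wf_stack pi -> soup_tau (cont_soup1 pi m) (cont_soup2 pi m).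
Proof.
  intros W. tau_by n_rec Rec (PPar (PVar 0) (PPar (POut n_rec (PVar 0)) Cont))
    [POut n_c (tr_stack pi); POut n_k (num m)]. finish_move.
Qed.

Lemma cont_soup2_inv pi m l Z : wf_stack pi ->
  soup_step (cont_soup2 pi m) l Z -> H_label l \/ (l = LTau /\ Permutation Z (cont_soup3 pi m)).
Proof.
  intros W H. destruct pi as [|t p].
  - invert_soup_step l H. finish_inv.
  - inversion W; subst. invert_soup_step l H. finish_inv.
Qed.

Lemma cont_soup2_tau pi m : wf_stack pi -> soup_tau (cont_soup2 pi m) (cont_soup3 pi m).
Proof.
  intros W. tau_by n_c (tr_stack pi) (PPar (PVar 0) (PPar (POut n_b done_flag) cont_wait))
    (bg_soup m).
  destruct pi as [|t p].
  - finish_move.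
  - inversion W; subst. finish_move.
Qed.

Lemma cont_soup3_nil_inv m l Z :
  soup_step (cont_soup3 [] m) l Z -> H_label l \/ (l = LTau /\ Permutation Z (done_soup m)).
Proof. intros H. invert_soup_step l H. finish_inv. Qed.

Lemma cont_soup3_nil_tau m : soup_tau (cont_soup3 [] m) (done_soup m).
Proof. tau_by n_b done_flag (PVar 0) (cont_wait :: bg_soup m). finish_move. Qed.

Lemma done_soup_inv m l Z :
  soup_step (done_soup m) l Z ->
  H_label l \/ (exists Q, l = LIn n_done Q /\ Permutation Z (inert_soup m)).
Proof. intros H. invert_soup_step l H. finish_inv_in. Qed.

Lemma done_soup_in m X : exists N2,
  soup_step (done_soup m) (LIn n_done X) N2 /\ Permutation N2 (inert_soup m).
Proof. input_by n_done PNil (cont_wait :: bg_soup m). finish_move. Qed.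

Lemma inert_soup_inv m l Z : soup_step (inert_soup m) l Z -> H_label l.
Proof. intros H. cut (H_label l \/ False); [tauto|]. invert_soup_step l H. Qed.

Lemma cont_soup3_cons_inv t p m l Z : wf_at 0 t -> wf_stack p ->
  soup_step (cont_soup3 (t :: p) m) l Z ->
  H_label l \/ (l = LTau /\ Permutation Z (cont_soup4 t p m)).
Proof. intros W1 W2 H. invert_soup_step l H. finish_inv. Qed.

Lemma cont_soup3_cons_tau t p m : wf_at 0 t -> wf_stack p ->
  soup_tau (cont_soup3 (t :: p) m) (cont_soup4 t p m).
Proof.
  intros W1 W2. tau_by n_hd (tr_term t) (PIn n_b (Choice (PVar 1)))
    (POut n_c (tr_stack p) :: POut n_b done_flag :: bg_soup m). finish_move.
Qed.

Lemma cont_soup4_inv t p m l Z : wf_at 0 t -> wf_stack p ->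
  soup_step (cont_soup4 t p m) l Z -> H_label l \/ (l = LTau /\ Permutation Z (cont_soup5 t p m)).
Proof. intros W1 W2 H. invert_soup_step l H. finish_inv. Qed.

Lemma cont_soup4_tau t p m : wf_at 0 t -> wf_stack p ->
  soup_tau (cont_soup4 t p m) (cont_soup5 t p m).
Proof.
  intros W1 W2.
  tau_by n_b done_flag (psum (enter_branch (tr_term t)) skip_branch) (POut n_c (tr_stack p) ::
    bg_soup m). finish_move.
Qed.

Lemma cont_soup5_inv t p m l Z : wf_at 0 t -> wf_stack p ->
  soup_step (cont_soup5 t p m) l Z ->
  H_label l \/ (l = LTau /\ Permutation Z (enter_soup1 t p m)) \/
     (l = LTau /\ Permutation Z (skip_soup1 t p m)).
Proof.
  intros W1 W2 H. invert_soup_step l H.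
  - right; left; (split; [reflexivity|]); compute_residual; solve_perm.
  - right; right; (split; [reflexivity|]); compute_residual; solve_perm.
Qed.

Lemma cont_soup5_tau_enter t p m : wf_at 0 t -> wf_stack p ->
  soup_tau (cont_soup5 t p m) (enter_soup1 t p m).
Proof.
  intros W1 W2. tau_by n_ch (enter_branch (tr_term t)) (PIn n_ch (PVar 1))
    (POut n_ch skip_branch :: POut n_c (tr_stack p) :: bg_soup m). finish_move.
Qed.

Lemma cont_soup5_tau_skip t p m : wf_at 0 t -> wf_stack p ->
  soup_tau (cont_soup5 t p m) (skip_soup1 t p m).
Proof.
  intros W1 W2. tau_by n_ch skip_branch (PIn n_ch (PVar 1))
    (POut n_ch (enter_branch (tr_term t)) :: POut n_c (tr_stack p) :: bg_soup m). finish_move.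
Qed.

Lemma enter_soup1_inv t p m l Z : wf_at 0 t -> wf_stack p ->
  soup_step (enter_soup1 t p m) l Z -> H_label l \/ (l = LTau /\ Permutation Z (enter_soup2 t p m)).
Proof. intros W1 W2 H. invert_soup_step l H. finish_inv. Qed.

Lemma enter_soup1_tau t p m : wf_at 0 t -> wf_stack p ->
  soup_tau (enter_soup1 t p m) (enter_soup2 t p m).
Proof.
  intros W1 W2.
  tau_by n_ch skip_branch (enter_branch (tr_term t)) (POut n_c (tr_stack p) :: bg_soup m).
  finish_move.
Qed.

Lemma skip_soup1_inv t p m l Z : wf_at 0 t -> wf_stack p ->
  soup_step (skip_soup1 t p m) l Z -> H_label l \/ (l = LTau /\ Permutation Z (skip_soup2 p m)).
Proof. intros W1 W2 H. invert_soup_step l H. finish_inv. Qed.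

Lemma skip_soup1_tau t p m : wf_at 0 t -> wf_stack p ->
  soup_tau (skip_soup1 t p m) (skip_soup2 p m).
Proof.
  intros W1 W2.
  tau_by n_ch (enter_branch (tr_term t)) skip_branch (POut n_c (tr_stack p) :: bg_soup m).
  finish_move.
Qed.

Lemma enter_soup2_inv t p m l Z : wf_at 0 t -> wf_stack p ->
  soup_step (enter_soup2 t p m) l Z ->
  H_label l \/ (exists Q, l = LIn n_enter Q /\ Permutation Z (enter_soup3 t p m)).
Proof. intros W1 W2 H. invert_soup_step l H. finish_inv_in. Qed.

Lemma enter_soup2_in t p m X : wf_at 0 t -> wf_stack p ->
  exists N2, soup_step (enter_soup2 t p m) (LIn n_enter X) N2 /\ Permutation N2 (enter_soup3 t p m).
Proof.
  intros W1 W2. input_by n_enter (PIn n_c (PPar (tr_term t) (POut n_c stack_nil)))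
    (POut n_c (tr_stack p) :: bg_soup m). finish_move.
Qed.

Lemma enter_soup3_inv t p m l Z : wf_at 0 t -> wf_stack p ->
  soup_step (enter_soup3 t p m) l Z -> H_label l \/ (l = LTau /\ Permutation Z (ev_soup t [] m)).
Proof. intros W1 W2 H. invert_soup_step l H. finish_inv. Qed.

Lemma enter_soup3_tau t p m : wf_at 0 t -> wf_stack p ->
  soup_tau (enter_soup3 t p m) (ev_soup t [] m).
Proof.
  intros W1 W2. tau_by n_c (tr_stack p) (PPar (tr_term t) (POut n_c stack_nil)) (bg_soup m).
  finish_move.
Qed.

Lemma skip_soup2_inv p m l Z : wf_stack p ->
  soup_step (skip_soup2 p m) l Z ->
  H_label l \/ (exists Q, l = LIn n_skip Q /\ Permutation Z (cont_soup0 p m)).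
Proof. intros W2 H. invert_soup_step l H. finish_inv_in. Qed.

Lemma skip_soup2_in p m X : wf_stack p ->
  exists N2, soup_step (skip_soup2 p m) (LIn n_skip X) N2 /\ Permutation N2 (cont_soup0 p m).
Proof.
  intros W2. input_by n_skip (POut n_init PNil) (POut n_c (tr_stack p) :: bg_soup m). finish_move.
Qed.

Ltac solve_In_H := unfold H_names, n_c, n_hd, n_b, n_k, n_init, n_rec, n_ch; simpl; intuition.

Lemma silent_proc_num f : silent_proc (num f).
Proof. induction f; simpl; auto; solve_In_H. Qed.

Lemma silent_proc_tr t : forall rho, silent_proc (tr rho t).
Proof.
  induction t; intros rho; cbn [tr silent_proc]; repeat split;
    first [apply IHt | apply IHt1 | apply IHt2 | apply silent_proc_num | simpl; solve_In_H].
Qed.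

Lemma silent_proc_tr_stack pi : silent_proc (tr_stack pi).
Proof.
  induction pi; cbn [tr_stack silent_proc]; repeat split;
    first [apply IHpi | apply silent_proc_tr | simpl; solve_In_H].
Qed.

Ltac solve_silent :=
  unfold silent; unfold_states;
  repeat match goal with |- context [match ?p with _ => _ end] => destruct p end;
  unfold lam_wait, lam_body, tr_term, rec_body, restart_body, done_flag, cont_wait, enter_branch,
    skip_branch, choice_reader, Choice, psum, Rec, Cont, Restart, stack_nil;
  repeat (apply Forall_cons || apply Forall_nil); cbn [silent_proc]; repeat split;
  first [apply silent_proc_num | apply silent_proc_tr | apply silent_proc_tr_stack | solve_In_H].

(** * Invariant classes of soups *)

(* The soups reachable by internal steps during the evaluation of [t]: the
   KAM states of the run of [t] with their beta and restart intermediates.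
   This evaluation starts from [[<t, [], m>_ev]], or in the middle of the
   restart that produced [t = u{m0/x}], or right after the argument [t] was
   entered. *)
Definition eval_class (t : term) (m : nat) (M : list proc) : Prop :=
  (exists t1 pi1, kam_star (t, []) (t1, pi1) /\
     (Permutation M (ev_soup t1 pi1 m) \/
      (exists u s p, t1 = Lam u /\ pi1 = s :: p /\
          (Permutation M (beta_soup1 u s p m) \/ Permutation M (beta_soup2 u s p m))) \/
      (exists u, t1 = Lam u /\ pi1 = [] /\
          (Permutation M (restart_soup1 u m) \/ Permutation M (restart_soup2 u m)))))
  \/ (exists u m0, m = S m0 /\ t = open u (FVar m0) /\ wf_at 1 u /\
        (Permutation M (restart_soup3 u m0) \/ Permutation M (restart_soup4 u m0) \/
         Permutation M (restart_soup5 u m0)))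
  \/ (exists p, wf_stack p /\ Permutation M (enter_soup3 t p m)).

Lemma eval_class_start t m : eval_class t m (ev_soup t [] m).
Proof. left. exists t, []. split; [apply rt_refl|]. left; apply Permutation_refl. Qed.

Lemma eval_class_perm t m M M' : Permutation M M' -> eval_class t m M -> eval_class t m M'.
Proof.
  intros HP H. unfold eval_class in *.
  assert (forall X, Permutation M X -> Permutation M' X) as HX
    by (intros; eapply Permutation_trans; [apply Permutation_sym, HP|auto]).
  destruct H as [[t1 [pi1 [Hk H]]]|[[u [m0 H]]|[p H]]].
  - left; exists t1, pi1; split; auto.
    destruct H as [H|[[u [s [p [E1 [E2 [H|H]]]]]]|[u [E1 [E2 [H|H]]]]]]; eauto 10.
  - right; left; exists u, m0; intuition.
  - right; right; exists p; intuition.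
Qed.

Lemma silent_eval_class t m M : eval_class t m M -> silent M.
Proof.
  intros H. destruct H as [[t1 [pi1 [Hk H]]]|[[u [m0 H]]|[p H]]].
  - destruct H as [H|[[u [s [p [E1 [E2 [H|H]]]]]]|[u [E1 [E2 [H|H]]]]]];
      eapply silent_perm; try (apply Permutation_sym; exact H); solve_silent.
  - destruct H as [_ [_ [_ [H|[H|H]]]]];
      eapply silent_perm; try (apply Permutation_sym; exact H); solve_silent.
  - destruct H as [_ H]. eapply silent_perm; [apply Permutation_sym; exact H|solve_silent].
Qed.

Lemma eval_class_tau t m M Z : wf_at 0 t -> eval_class t m M -> soup_step M LTau Z ->
  eval_class t m Z.
Proof.
  intros W H Hs. destruct H as [[t1 [pi1 [Hk H]]]|[[u [m0 H]]|[p H]]].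
  - destruct (kam_star_wf_init _ _ _ W Hk) as [W1 W2].
    destruct H as [H|[[u [s [p [E1 [E2 [H|H]]]]]]|[u [E1 [E2 [H|H]]]]]];
      apply (soup_step_perm _ _ _ _ H) in Hs.
    + destruct t1 as [f|i|u|t1 t2].
      * apply ev_fvar_inv in Hs as [[]|[[Q [f' [_ [E _]]]]|[Q [_ [E _]]]]]; auto; discriminate.
      * simpl in W1; lia.
      * destruct pi1 as [|s p].
        -- apply ev_lam_nil_inv in Hs as [[]|[_ HP]]; auto.
           left. exists (Lam u), []. split; auto. right; right. eauto.
        -- inversion W2; subst. apply ev_lam_cons_inv in Hs as [[]|[_ HP]]; auto.
           left. exists (Lam u), (s :: p). split; auto. right; left. eauto 7.
      * destruct W1. apply ev_app_inv in Hs as [[]|[_ HP]]; auto.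
        left. exists t1, (t2 :: pi1). split; [eapply kam_star_snoc; eauto; constructor|].
        left; auto.
    + subst. inversion W2; subst. apply beta_soup1_inv in Hs as [[]|[_ HP]]; auto.
      left. exists (Lam u), (s :: p). split; auto. right; left. eauto 7.
    + subst. inversion W2; subst. apply beta_soup2_inv in Hs as [[]|[_ HP]]; auto.
      left. exists (open u s), p. split; [eapply kam_star_snoc; eauto; constructor|]. left; auto.
    + subst. apply restart_soup1_inv in Hs as [[]|[_ HP]]; auto.
      left. exists (Lam u), []. split; auto. right; right. eauto.
    + subst. apply restart_soup2_inv in Hs as [[]|[Q [E _]]]; auto. discriminate.
  - destruct H as [E1 [E2 [W1 [H|[H|H]]]]]; apply (soup_step_perm _ _ _ _ H) in Hs.
    + apply restart_soup3_inv in Hs as [[]|[_ HP]]; auto. right; left. exists u, m0. intuition.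
    + apply restart_soup4_inv in Hs as [[]|[_ HP]]; auto. right; left. exists u, m0. intuition.
    + apply restart_soup5_inv in Hs as [[]|[_ HP]]; auto. subst.
      left. exists (open u (FVar m0)), []. split; [apply rt_refl|]. left; auto.
  - destruct H as [W2 H]. apply (soup_step_perm _ _ _ _ H) in Hs.
    apply enter_soup3_inv in Hs as [[]|[_ HP]]; auto.
    left. exists t, []. split; [apply rt_refl|]. left; auto.
Qed.

Ltac contradict_label Ha :=
  match goal with
  | H : H_label (LIn _ _) |- _ => exfalso; apply Ha; exact H
  | H : LIn _ _ = LTau |- _ => discriminate H
  end.

Lemma eval_class_in t m M a X Z : wf_at 0 t -> eval_class t m M -> ~ In a H_names ->
  soup_step M (LIn a X) Z ->
  (a = n_lambda /\ exists u, kam_star (t, []) (Lam u, []) /\ Permutation M (restart_soup2 u m) /\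
      Permutation Z (restart_soup3 u m)) \/
  (exists f pi, kam_star (t, []) (FVar f, pi) /\ Permutation M (ev_soup (FVar f) pi m) /\
     ((exists f', f = S f' /\ a = n_suc /\ Permutation Z (ev_soup (FVar f') pi m)) \/
      (f = 0 /\ a = n_z /\ Permutation Z (cont_soup0 pi m)))).
Proof.
  intros W H Ha Hs. destruct H as [[t1 [pi1 [Hk H]]]|[[u [m0 H]]|[p H]]].
  - destruct (kam_star_wf_init _ _ _ W Hk) as [W1 W2].
    destruct H as [H|[[u [s [p [E1 [E2 [H|H]]]]]]|[u [E1 [E2 [H|H]]]]]];
      pose proof (soup_step_perm _ _ _ _ H Hs) as Hs'.
    + destruct t1 as [f|i|u|t1 t2].
      * apply ev_fvar_inv in Hs' as [Hl|[[Q [f' [E1 [E2 HP]]]]|[Q [E1 [E2 HP]]]]]; auto.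
        -- contradict_label Ha.
        -- injection E2 as <- _. right. exists f, pi1. repeat split; auto. left; eauto.
        -- injection E2 as <- _. right. exists f, pi1. repeat split; auto.
      * simpl in W1; lia.
      * destruct pi1 as [|s p].
        -- apply ev_lam_nil_inv in Hs' as [Hl|[E _]]; first [contradict_label Ha | auto].
        -- inversion W2; subst.
           apply ev_lam_cons_inv in Hs' as [Hl|[E _]]; first [contradict_label Ha | auto].
      * destruct W1. apply ev_app_inv in Hs' as [Hl|[E _]]; first [contradict_label Ha | auto].
    + subst. inversion W2; subst.
      apply beta_soup1_inv in Hs' as [Hl|[E _]]; first [contradict_label Ha | auto].
    + subst. inversion W2; subst.
      apply beta_soup2_inv in Hs' as [Hl|[E _]]; first [contradict_label Ha | auto].
    + subst. apply restart_soup1_inv in Hs' as [Hl|[E _]]; first [contradict_label Ha | auto].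
    + subst. apply restart_soup2_inv in Hs' as [Hl|[Q [E HP]]]; [contradict_label Ha| |auto].
      injection E as <- _. left. split; auto. exists u. auto.
  - destruct H as [E1 [E2 [W1 [H|[H|H]]]]]; pose proof (soup_step_perm _ _ _ _ H Hs) as Hs'.
    + apply restart_soup3_inv in Hs' as [Hl|[E _]]; first [contradict_label Ha | auto].
    + apply restart_soup4_inv in Hs' as [Hl|[E _]]; first [contradict_label Ha | auto].
    + apply restart_soup5_inv in Hs' as [Hl|[E _]]; first [contradict_label Ha | auto].
  - destruct H as [W2 H]. pose proof (soup_step_perm _ _ _ _ H Hs) as Hs'.
    apply enter_soup3_inv in Hs' as [Hl|[E _]]; first [contradict_label Ha | auto].
Qed.

Lemma ev_soup_kam_step t1 pi1 t2 pi2 m : wf_at 0 t1 -> wf_stack pi1 ->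
  kam_step (t1, pi1) (t2, pi2) ->
  soup_star (ev_soup t1 pi1 m) (ev_soup t2 pi2 m).
Proof.
  intros W1 W2 H. inversion H; subst.
  - destruct W1. apply soup_star_step, ev_app_tau; auto.
  - inversion W2; subst. simpl in W1.
    eapply soup_star_trans; [apply soup_star_step, ev_lam_cons_tau; auto|].
    eapply soup_star_trans; [apply soup_star_step, beta_soup1_tau; auto|].
    apply soup_star_step, beta_soup2_tau; auto.
Qed.

Lemma ev_soup_kam_star c1 c2 m : kam_star c1 c2 -> wf_conf c1 ->
  soup_star (ev_soup (fst c1) (snd c1) m) (ev_soup (fst c2) (snd c2) m).
Proof.
  intros H. apply clos_rt_rt1n in H. induction H; intros Hw.
  - apply soup_star_refl.
  - destruct x as [t1 pi1], y as [t2 pi2]. destruct Hw as [W1 W2].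
    eapply soup_star_trans; [apply ev_soup_kam_step; eauto|].
    apply IHclos_refl_trans_1n. apply (kam_step_wf _ _ H); split; auto.
Qed.

Lemma eval_class_forward t m M : wf_at 0 t -> eval_class t m M ->
  (exists t1 pi1, kam_star (t, []) (t1, pi1) /\ soup_reach M (ev_soup t1 pi1 m)) \/
  (exists u, kam_star (t, []) (Lam u, []) /\ soup_reach M (restart_soup2 u m)).
Proof.
  intros W H. destruct H as [[t1 [pi1 [Hk H]]]|[[u [m0 H]]|[p H]]].
  - destruct (kam_star_wf_init _ _ _ W Hk) as [W1 W2].
    destruct H as [H|[[u [s [p [E1 [E2 [H|H]]]]]]|[u [E1 [E2 [H|H]]]]]]; subst.
    + left. exists t1, pi1. split; auto. apply soup_reach_refl; auto.
    + inversion W2; subst. left. exists (open u s), p. split.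
      { eapply kam_star_snoc; eauto; constructor. }
      eapply soup_reach_trans; [eapply soup_reach_perm_tau; [exact H|apply beta_soup1_tau; auto]|].
      apply soup_reach_tau; apply beta_soup2_tau; auto.
    + inversion W2; subst. left. exists (open u s), p. split.
      { eapply kam_star_snoc; eauto; constructor. }
      eapply soup_reach_perm_tau; [exact H|apply beta_soup2_tau; auto].
    + right. exists u. split; auto.
      eapply soup_reach_perm_tau; [exact H|apply restart_soup1_tau; auto].
    + right. exists u. split; auto. apply soup_reach_refl; auto.
  - destruct H as [E1 [E2 [W1 H]]]; subst. left. exists (open u (FVar m0)), [].
    split; [apply rt_refl|].
    assert (H5 : soup_reach (restart_soup5 u m0) (ev_soup (open u (FVar m0)) [] (S m0)))
      by (apply soup_reach_tau, restart_soup5_tau; auto).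
    assert (H4 : soup_reach (restart_soup4 u m0) (ev_soup (open u (FVar m0)) [] (S m0)))
      by (eapply soup_reach_trans; [apply soup_reach_tau, restart_soup4_tau; auto|auto]).
    assert (H3 : soup_reach (restart_soup3 u m0) (ev_soup (open u (FVar m0)) [] (S m0)))
      by (eapply soup_reach_trans; [apply soup_reach_tau, restart_soup3_tau; auto|auto]).
    destruct H as [H|[H|H]]; (eapply soup_reach_trans; [apply soup_reach_refl; exact H|auto]).
  - destruct H as [W2 H]. left. exists t, []. split; [apply rt_refl|].
    eapply soup_reach_perm_tau; [exact H|apply enter_soup3_tau; auto].
Qed.

Lemma ev_soup_reach_kam t1 pi1 t2 pi2 m : kam_star (t1, pi1) (t2, pi2) ->
  wf_at 0 t1 -> wf_stack pi1 -> soup_reach (ev_soup t1 pi1 m) (ev_soup t2 pi2 m).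
Proof.
  intros H W1 W2. exists (ev_soup t2 pi2 m); split; auto.
  apply (ev_soup_kam_star _ _ m H); split; auto.
Qed.

Lemma eval_class_reach_lam s m N u : wf_at 0 s -> eval_class s m N ->
  kam_star (s, []) (Lam u, []) -> soup_reach N (restart_soup2 u m).
Proof.
  intros W H Hk. destruct (eval_class_forward _ _ _ W H) as [[t1 [pi1 [Hk1 Hp]]]|[u' [Hk1 Hp]]].
  - destruct (kam_star_wf_init _ _ _ W Hk1) as [W1 W2].
    pose proof (kam_star_to_terminal _ _ _ Hk1 Hk (terminal_lam u)) as Hk2.
    destruct (kam_star_wf_init _ _ _ W Hk) as [Wu _].
    eapply soup_reach_trans; [exact Hp|].
    eapply soup_reach_trans; [apply ev_soup_reach_kam; eauto|].
    eapply soup_reach_trans; [apply soup_reach_tau, ev_lam_nil_tau; auto|].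
    apply soup_reach_tau, restart_soup1_tau; auto.
  - pose proof (kam_star_to_terminal _ _ _ Hk1 Hk (terminal_lam u)) as Hk2.
    apply terminal_star in Hk2; [|apply terminal_lam]. injection Hk2 as ->. auto.
Qed.

Lemma eval_class_reach_fvar s m N f sg : wf_at 0 s -> eval_class s m N ->
  kam_star (s, []) (FVar f, sg) -> soup_reach N (ev_soup (FVar f) sg m).
Proof.
  intros W H Hk. destruct (eval_class_forward _ _ _ W H) as [[t1 [pi1 [Hk1 Hp]]]|[u' [Hk1 Hp]]].
  - destruct (kam_star_wf_init _ _ _ W Hk1) as [W1 W2].
    pose proof (kam_star_to_terminal _ _ _ Hk1 Hk (terminal_fvar f sg)) as Hk2.
    eapply soup_reach_trans; [exact Hp|]. apply ev_soup_reach_kam; eauto.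
  - pose proof (kam_star_to_terminal _ _ _ Hk1 Hk (terminal_fvar f sg)) as Hk2.
    apply terminal_star in Hk2; [|apply terminal_lam]. discriminate.
Qed.

Definition cont_class (pi : stack) (m : nat) (M : list proc) : Prop :=
  Permutation M (cont_soup0 pi m) \/ Permutation M (cont_soup1 pi m) \/
  Permutation M (cont_soup2 pi m) \/ Permutation M (cont_soup3 pi m) \/
  (pi = [] /\ Permutation M (done_soup m)) \/
  (exists t p, pi = t :: p /\
     (Permutation M (cont_soup4 t p m) \/ Permutation M (cont_soup5 t p m))).

Definition enter_class t p m M :=
  Permutation M (enter_soup1 t p m) \/ Permutation M (enter_soup2 t p m).

Definition skip_class t p m M :=
  Permutation M (skip_soup1 t p m) \/ Permutation M (skip_soup2 p m).

Lemma cont_class_tau pi m M Z : wf_stack pi -> cont_class pi m M -> soup_step M LTau Z ->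
  cont_class pi m Z \/
  (exists t p, pi = t :: p /\ Permutation M (cont_soup5 t p m) /\
     (Permutation Z (enter_soup1 t p m) \/ Permutation Z (skip_soup1 t p m))).
Proof.
  intros W H Hs. unfold cont_class in H.
  destruct H as [H|[H|[H|[H|[[E H]|[t [p [E [H|H]]]]]]]]];
    pose proof (soup_step_perm _ _ _ _ H Hs) as Hs';
    try subst pi.
  - apply cont_soup0_inv in Hs' as [[]|[_ HP]]; auto. left; unfold cont_class; auto.
  - apply cont_soup1_inv in Hs' as [[]|[_ HP]]; auto. left; unfold cont_class; auto.
  - apply cont_soup2_inv in Hs' as [[]|[_ HP]]; auto. left; unfold cont_class; auto 6.
  - destruct pi as [|t p].
    + apply cont_soup3_nil_inv in Hs' as [[]|[_ HP]]; auto. left; unfold cont_class; auto 7.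
    + inversion W; subst. apply cont_soup3_cons_inv in Hs' as [[]|[_ HP]]; auto.
      left; unfold cont_class; right; right; right; right; right. eauto.
  - apply done_soup_inv in Hs' as [[]|[Q [E' _]]]; discriminate.
  - inversion W; subst. apply cont_soup4_inv in Hs' as [[]|[_ HP]]; auto.
    left; unfold cont_class; right; right; right; right; right. eauto.
  - inversion W; subst.
    apply cont_soup5_inv in Hs' as [[]|[[_ HP]|[_ HP]]]; auto; right; exists t, p; auto.
Qed.

Lemma cont_class_in pi m M a X Z : wf_stack pi -> cont_class pi m M -> ~ In a H_names ->
  soup_step M (LIn a X) Z ->
  pi = [] /\ a = n_done /\ Permutation M (done_soup m) /\ Permutation Z (inert_soup m).
Proof.
  intros W H Ha Hs. unfold cont_class in H.
  destruct H as [H|[H|[H|[H|[[E H]|[t [p [E [H|H]]]]]]]]];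
    pose proof (soup_step_perm _ _ _ _ H Hs) as Hs';
    try subst pi.
  - apply cont_soup0_inv in Hs' as [Hl|[E _]]; first [contradict_label Ha | auto].
  - apply cont_soup1_inv in Hs' as [Hl|[E _]]; first [contradict_label Ha | auto].
  - apply cont_soup2_inv in Hs' as [Hl|[E _]]; first [contradict_label Ha | auto].
  - destruct pi as [|t p].
    + apply cont_soup3_nil_inv in Hs' as [Hl|[E _]]; first [contradict_label Ha | auto].
    + inversion W; subst.
      apply cont_soup3_cons_inv in Hs' as [Hl|[E _]]; first [contradict_label Ha | auto].
  - apply done_soup_inv in Hs' as [Hl|[Q [E' HP]]]; [contradict_label Ha|]. injection E' as <- _.
    auto.
  - inversion W; subst.
    apply cont_soup4_inv in Hs' as [Hl|[E' _]]; first [contradict_label Ha | auto].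
  - inversion W; subst.
    apply cont_soup5_inv in Hs' as [Hl|[[E' _]|[E' _]]]; first [contradict_label Ha | auto].
Qed.

Lemma enter_class_tau t p m M Z : wf_at 0 t -> wf_stack p -> enter_class t p m M ->
  soup_step M LTau Z -> enter_class t p m Z.
Proof.
  intros W1 W2 [H|H] Hs; pose proof (soup_step_perm _ _ _ _ H Hs) as Hs'.
  - apply enter_soup1_inv in Hs' as [[]|[_ HP]]; auto. right; auto.
  - apply enter_soup2_inv in Hs' as [[]|[Q [E _]]]; auto. discriminate.
Qed.

Lemma enter_class_in t p m M a X Z : wf_at 0 t -> wf_stack p -> enter_class t p m M ->
  ~ In a H_names -> soup_step M (LIn a X) Z ->
  a = n_enter /\ Permutation M (enter_soup2 t p m) /\ Permutation Z (enter_soup3 t p m).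
Proof.
  intros W1 W2 [H|H] Ha Hs; pose proof (soup_step_perm _ _ _ _ H Hs) as Hs'.
  - apply enter_soup1_inv in Hs' as [Hl|[E _]]; first [contradict_label Ha | auto].
  - apply enter_soup2_inv in Hs' as [Hl|[Q [E HP]]]; [contradict_label Ha| |auto|auto].
    injection E as <- _. auto.
Qed.

Lemma skip_class_tau t p m M Z : wf_at 0 t -> wf_stack p -> skip_class t p m M ->
  soup_step M LTau Z -> skip_class t p m Z.
Proof.
  intros W1 W2 [H|H] Hs; pose proof (soup_step_perm _ _ _ _ H Hs) as Hs'.
  - apply skip_soup1_inv in Hs' as [[]|[_ HP]]; auto. right; auto.
  - apply skip_soup2_inv in Hs' as [[]|[Q [E _]]]; auto. discriminate.
Qed.

Lemma skip_class_in t p m M a X Z : wf_at 0 t -> wf_stack p -> skip_class t p m M ->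
  ~ In a H_names -> soup_step M (LIn a X) Z ->
  a = n_skip /\ Permutation M (skip_soup2 p m) /\ Permutation Z (cont_soup0 p m).
Proof.
  intros W1 W2 [H|H] Ha Hs; pose proof (soup_step_perm _ _ _ _ H Hs) as Hs'.
  - apply skip_soup1_inv in Hs' as [Hl|[E _]]; first [contradict_label Ha | auto].
  - apply skip_soup2_inv in Hs' as [Hl|[Q [E HP]]]; [contradict_label Ha| |auto].
    injection E as <- _. auto.
Qed.

Lemma cont_class_reach_done m M : cont_class [] m M -> soup_reach M (done_soup m).
Proof.
  assert (H3 : soup_reach (cont_soup3 [] m) (done_soup m))
    by (apply soup_reach_tau, cont_soup3_nil_tau).
  assert (H2 : soup_reach (cont_soup2 [] m) (done_soup m))
    by (eapply soup_reach_trans; [apply soup_reach_tau, cont_soup2_tau; constructor|auto]).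
  assert (H1 : soup_reach (cont_soup1 [] m) (done_soup m))
    by (eapply soup_reach_trans; [apply soup_reach_tau, cont_soup1_tau; constructor|auto]).
  assert (H0 : soup_reach (cont_soup0 [] m) (done_soup m))
    by (eapply soup_reach_trans; [apply soup_reach_tau, cont_soup0_tau; constructor|auto]).
  intros H. unfold cont_class in H.
  destruct H as [H|[H|[H|[H|[[E H]|[t [p [E [H|H]]]]]]]]]; try discriminate;
    (eapply soup_reach_trans; [apply soup_reach_refl; exact H|auto]). apply soup_reach_refl; auto.
Qed.

Lemma cont_class_reach_choice t p m M : wf_at 0 t -> wf_stack p -> cont_class (t :: p) m M ->
  soup_reach M (cont_soup5 t p m).
Proof.
  intros W1 W2.
  assert (W : wf_stack (t :: p)) by (constructor; auto).
  assert (H4 : soup_reach (cont_soup4 t p m) (cont_soup5 t p m))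
    by (apply soup_reach_tau, cont_soup4_tau; auto).
  assert (H3 : soup_reach (cont_soup3 (t :: p) m) (cont_soup5 t p m))
    by (eapply soup_reach_trans; [apply soup_reach_tau, cont_soup3_cons_tau; auto|auto]).
  assert (H2 : soup_reach (cont_soup2 (t :: p) m) (cont_soup5 t p m))
    by (eapply soup_reach_trans; [apply soup_reach_tau, cont_soup2_tau; auto|auto]).
  assert (H1 : soup_reach (cont_soup1 (t :: p) m) (cont_soup5 t p m))
    by (eapply soup_reach_trans; [apply soup_reach_tau, cont_soup1_tau; auto|auto]).
  assert (H0 : soup_reach (cont_soup0 (t :: p) m) (cont_soup5 t p m))
    by (eapply soup_reach_trans; [apply soup_reach_tau, cont_soup0_tau; auto|auto]).
  intros H. unfold cont_class in H.
  destruct H as [H|[H|[H|[H|[[E H]|[t' [p' [E [H|H]]]]]]]]]; try discriminate;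
    try (injection E as <- <-);
    (eapply soup_reach_trans; [apply soup_reach_refl; exact H|auto]). apply soup_reach_refl; auto.
Qed.

Lemma enter_class_reach t p m M : wf_at 0 t -> wf_stack p -> enter_class t p m M ->
  soup_reach M (enter_soup2 t p m).
Proof.
  intros W1 W2 [H|H]; [|apply soup_reach_refl; auto].
  eapply soup_reach_perm_tau; [exact H|apply enter_soup1_tau; auto].
Qed.

Lemma skip_class_reach t p m M : wf_at 0 t -> wf_stack p -> skip_class t p m M ->
  soup_reach M (skip_soup2 p m).
Proof.
  intros W1 W2 [H|H]; [|apply soup_reach_refl; auto].
  eapply soup_reach_perm_tau; [exact H|apply skip_soup1_tau; auto].
Qed.

Lemma silent_cont_class pi m M : cont_class pi m M -> silent M.
Proof.
  intros H. unfold cont_class in H.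
  destruct H as [H|[H|[H|[H|[[E H]|[t [p [E [H|H]]]]]]]]];
    eapply silent_perm; try (apply Permutation_sym; exact H); solve_silent.
Qed.

Lemma silent_enter_class t p m M : enter_class t p m M -> silent M.
Proof. intros [H|H]; eapply silent_perm; try (apply Permutation_sym; exact H); solve_silent. Qed.
Lemma silent_skip_class t p m M : skip_class t p m M -> silent M.
Proof. intros [H|H]; eapply silent_perm; try (apply Permutation_sym; exact H); solve_silent. Qed.

Lemma eval_class_soup_star t m M M' : wf_at 0 t -> eval_class t m M -> soup_star M M' ->
  eval_class t m M'.
Proof.
  intros W H Hs. apply clos_rt_rt1n in Hs. induction Hs; auto.
  apply IHHs. destruct H0 as [S [H1 H2]]. eapply eval_class_perm; [exact H2|].
  eapply eval_class_tau; eauto.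
Qed.

Definition stack_class (sg : stack) (m : nat) (M : list proc) : Prop :=
  cont_class sg m M \/ (exists s q, sg = s :: q /\ (enter_class s q m M \/ skip_class s q m M)).

Lemma stack_class_perm sg m M M' : Permutation M M' -> stack_class sg m M -> stack_class sg m M'.
Proof.
  intros HP H.
  assert (HX : forall X, Permutation M X -> Permutation M' X)
    by (intros; eapply Permutation_trans; [apply Permutation_sym, HP|auto]).
  unfold stack_class, cont_class, enter_class, skip_class in *.
  destruct H as [[H|[H|[H|[H|[[E H]|[t [p [E [H|H]]]]]]]]]|[s [q [E [[H|H]|[H|H]]]]]]; eauto 10.
  - left; right; right; right; right; right. exists t, p. auto.
  - left; right; right; right; right; right. exists t, p. auto.
Qed.

Lemma stack_class_tau sg m M Z : wf_stack sg -> stack_class sg m M -> soup_step M LTau Z ->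
  stack_class sg m Z.
Proof.
  intros W [H|[s [q [E [H|H]]]]] Hs.
  - destruct (cont_class_tau _ _ _ _ W H Hs) as [H'|[t [p [E [HM [HZ|HZ]]]]]]; [left; auto| |];
      right; exists t, p; split; auto; [left|right]; left; auto.
  - subst sg; inversion W; subst. right; exists s, q; split; auto.
    left; eapply enter_class_tau; eauto.
  - subst sg; inversion W; subst. right; exists s, q; split; auto.
    right; eapply skip_class_tau; eauto.
Qed.

Lemma stack_class_soup_star sg m M M' : wf_stack sg -> stack_class sg m M -> soup_star M M' ->
  stack_class sg m M'.
Proof.
  intros W H Hs. apply clos_rt_rt1n in Hs. induction Hs; auto.
  apply IHHs. destruct H0 as [S [H1 H2]]. eapply stack_class_perm; [exact H2|].
  eapply stack_class_tau; eauto.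
Qed.

Lemma stack_class_in sg m M a X Z : wf_stack sg -> stack_class sg m M -> ~ In a H_names ->
  soup_step M (LIn a X) Z ->
  (sg = [] /\ a = n_done) \/
  (exists s q, sg = s :: q /\ a = n_enter /\ Permutation Z (enter_soup3 s q m)) \/
  (exists s q, sg = s :: q /\ a = n_skip /\ Permutation Z (cont_soup0 q m)).
Proof.
  intros W [H|[s [q [E [H|H]]]]] Ha Hs.
  - destruct (cont_class_in _ _ _ _ _ _ W H Ha Hs) as [E [Ea _]]. left; auto.
  - subst sg; inversion W; subst.
    destruct (enter_class_in _ _ _ _ _ _ _ H2 H3 H Ha Hs) as [Ea [_ HZ]].
    right; left; eauto.
  - subst sg; inversion W; subst.
    destruct (skip_class_in _ _ _ _ _ _ _ H2 H3 H Ha Hs) as [Ea [_ HZ]].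
    right; right; eauto.
Qed.

Lemma ev_fvar_soup_star f p m M M' : wf_stack p -> Permutation M (ev_soup (FVar f) p m) ->
  soup_star M M' ->
  Permutation M' (ev_soup (FVar f) p m).
Proof.
  intros W HP Hs. apply clos_rt_rt1n in Hs. destruct Hs; auto.
  destruct H as [S [H1 _]]. apply (soup_step_perm _ _ _ _ HP) in H1.
  apply ev_fvar_inv in H1 as [[]|[[Q [f' [_ [E _]]]]|[Q [_ [E _]]]]]; auto; discriminate.
Qed.

(** * Completeness *)

Section Completeness.

Variable Rel : term -> term -> Prop.
Hypothesis Hbis : nf_bisimulation Rel.

Definition related_terms t s m :=
  wf_at 0 t /\ wf_at 0 s /\ Rel t s /\ fv_below (fv t ++ fv s) m.
Definition related_stacks p q m :=
  Forall2 Rel p q /\ wf_stack p /\ wf_stack q /\ fv_below (flat_map fv p ++ flat_map fv q) m.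

(* The states of two runs of encodings of [Rel]-related terms, taken in step:
   evaluation, decoding of a head variable, unstacking of its arguments, and
   the two resolutions of the choice. *)
Definition soup_rel (M N : list proc) : Prop :=
  (exists t s m, related_terms t s m /\ eval_class t m M /\ eval_class s m N)
  \/ (exists f p q m, related_stacks p q m /\
        Permutation M (ev_soup (FVar f) p m) /\ Permutation N (ev_soup (FVar f) q m))
  \/ (exists p q m, related_stacks p q m /\ cont_class p m M /\ cont_class q m N)
  \/ (exists t p s q m, related_terms t s m /\ wf_stack p /\ wf_stack q /\
        enter_class t p m M /\ enter_class s q m N)
  \/ (exists t p s q m, related_stacks p q m /\ wf_at 0 t /\ wf_at 0 s /\
        skip_class t p m M /\ skip_class s q m N)
  \/ (exists m, Permutation M (inert_soup m) /\ Permutation N (inert_soup m)).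

Lemma related_terms_sym t s m : related_terms t s m -> related_terms s t m.
Proof. intros [W1 [W2 [R F]]]. repeat split; auto using fv_below_app_comm. apply Hbis, R. Qed.

Lemma related_stacks_sym p q m : related_stacks p q m -> related_stacks q p m.
Proof.
  intros [R [W1 [W2 F]]]. repeat split; auto using fv_below_app_comm.
  clear -Hbis R. induction R; constructor; auto. apply Hbis; auto.
Qed.

Lemma soup_rel_sym M N : soup_rel M N -> soup_rel N M.
Proof.
  unfold soup_rel. intros [H|[H|[H|[H|[H|H]]]]].
  - destruct H as [t [s [m [G [H1 H2]]]]]. left. exists s, t, m. auto using related_terms_sym.
  - destruct H as [f [p [q [m [G [H1 H2]]]]]]. right; left. exists f, q, p, m.
    auto using related_stacks_sym.
  - destruct H as [p [q [m [G [H1 H2]]]]]. right; right; left. exists q, p, m.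
    auto using related_stacks_sym.
  - destruct H as [t [p [s [q [m [G [W1 [W2 [H1 H2]]]]]]]]]. right; right; right; left.
    exists s, q, t, p, m. auto 7 using related_terms_sym.
  - destruct H as [t [p [s [q [m [G [W1 [W2 [H1 H2]]]]]]]]]. right; right; right; right; left.
    exists s, q, t, p, m. auto 7 using related_stacks_sym.
  - destruct H as [m [H1 H2]]. right; right; right; right; right. exists m; auto.
Qed.

Lemma related_stacks_cons t p s q m :
  related_stacks (t :: p) (s :: q) m -> related_terms t s m /\ related_stacks p q m.
Proof.
  intros [HF [W1 [W2 F]]]. inversion HF; subst. inversion W1; subst. inversion W2; subst.
  split; repeat split; auto; intros g Hg; apply F; simpl;
    apply in_app_or in Hg as [Hg|Hg]; rewrite !in_app_iff; tauto.
Qed.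

Lemma soup_rel_match_tau N Y S : soup_reach N Y -> soup_rel S Y ->
  exists N', soup_star N N' /\ perm_closure soup_rel S N'.
Proof. intros [N' [H1 H2]] HR. exists N'; split; auto. exists S, Y; repeat split; auto. Qed.

Lemma soup_rel_match_in N Y1 a X Y2 S : soup_reach N Y1 ->
  (exists N2, soup_step Y1 (LIn a X) N2 /\ Permutation N2 Y2) -> soup_rel S Y2 ->
  soup_weak_input soup_rel N a X S.
Proof.
  intros [N1 [H1 H2]] [N2 [H3 H4]] HR. exists N1, N2, N2. repeat split; auto.
  - eapply soup_step_perm; [apply Permutation_sym; exact H2|exact H3].
  - apply soup_star_refl.
  - exists S, Y2; repeat split; auto.
Qed.

(* The fresh variable [m] given to the restarted lambdas is above every free
   variable, hence a valid instance of clause (1) of normal-form bisimulation. *)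
Lemma soup_rel_input_lam t s m u N X Z : related_terms t s m -> eval_class s m N ->
  kam_star (t, []) (Lam u, []) -> Permutation Z (restart_soup3 u m) ->
  soup_weak_input soup_rel N n_lambda X Z.
Proof.
  intros [Wt [Ws [R F]]] HN Hk HZ.
  destruct (proj1 (proj2 Hbis t s R) u Hk) as [s' [Hk' Ho]].
  destruct (kam_star_wf_init _ _ _ Wt Hk) as [Wu _].
  destruct (kam_star_wf_init _ _ _ Ws Hk') as [Wu' _]. simpl in Wu, Wu'.
  pose proof (fv_below_kam_star_lam _ _ _ Hk (fv_below_app_l _ _ _ F)) as Fu.
  pose proof (fv_below_kam_star_lam _ _ _ Hk' (fv_below_app_r _ _ _ F)) as Fu'.
  eapply soup_rel_match_in; [eapply eval_class_reach_lam; eauto|apply restart_soup2_in; auto|].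
  left. exists (open u (FVar m)), (open s' (FVar m)), (S m). repeat split.
  - apply wf_open; simpl; auto.
  - apply wf_open; simpl; auto.
  - apply Ho; apply fv_below_notin; auto.
  - apply fv_below_app; apply fv_below_open_fresh; auto.
  - right; left. exists u, m. repeat split; auto.
  - right; left. exists s', m. repeat split; auto.
Qed.

Lemma soup_rel_input_fvar t s m f pi N : related_terms t s m -> eval_class s m N ->
  kam_star (t, []) (FVar f, pi) ->
  exists pi', related_stacks pi pi' m /\ soup_reach N (ev_soup (FVar f) pi' m).
Proof.
  intros [Wt [Ws [R F]]] HN Hk.
  destruct (proj2 (proj2 Hbis t s R) _ _ Hk) as [pi' [Hk' HF]].
  destruct (kam_star_wf_init _ _ _ Wt Hk) as [_ Wp].
  destruct (kam_star_wf_init _ _ _ Ws Hk') as [_ Wp'].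
  exists pi'; split; [|eapply eval_class_reach_fvar; eauto].
  repeat split; auto. apply fv_below_app.
  - eapply fv_below_kam_star_fvar; [exact Hk|eapply fv_below_app_l; eauto].
  - eapply fv_below_kam_star_fvar; [exact Hk'|eapply fv_below_app_r; eauto].
Qed.

Lemma soup_rel_eval_simulates t s m M N : related_terms t s m ->
  eval_class t m M -> eval_class s m N -> soup_simulates soup_rel M N.
Proof.
  intros G H1 H2. pose proof G as [Wt [Ws _]].
  split; [eapply silent_eval_class; eauto|split].
  - intros Z Hs. apply soup_rel_match_tau with N; [apply soup_reach_refl; auto|].
    left. exists t, s, m. split; auto. split; auto. eapply eval_class_tau; eauto.
  - intros a X Z Ha Hs. destruct (eval_class_in _ _ _ _ _ _ Wt H1 Ha Hs) as
      [[Ea [u [Hk [HM HZ]]]]|[f [pi [Hk [HM [[f' [Ef [Ea HZ]]]|[Ef [Ea HZ]]]]]]]]; subst a.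
    + eapply soup_rel_input_lam; eauto.
    + subst f. destruct (soup_rel_input_fvar _ _ _ _ _ _ G H2 Hk) as [pi' [GS HN]].
      pose proof GS as [_ [_ [Wq _]]].
      eapply soup_rel_match_in; [exact HN|apply ev_suc_in; auto|].
      right; left. exists f', pi, pi', m. auto.
    + subst f. destruct (soup_rel_input_fvar _ _ _ _ _ _ G H2 Hk) as [pi' [GS HN]].
      pose proof GS as [_ [_ [Wq _]]].
      eapply soup_rel_match_in; [exact HN|apply ev_zero_in; auto|].
      right; right; left. exists pi, pi', m. split; [exact GS|split; left; auto].
Qed.

Lemma soup_rel_fvar_simulates f p q m M N : related_stacks p q m ->
  Permutation M (ev_soup (FVar f) p m) -> Permutation N (ev_soup (FVar f) q m) ->
  soup_simulates soup_rel M N.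
Proof.
  intros GS H1 H2. pose proof GS as [HF [Wp [Wq Fpq]]].
  split; [eapply silent_perm; [apply Permutation_sym; exact H1|solve_silent]|split].
  - intros Z Hs. apply (soup_step_perm _ _ _ _ H1) in Hs.
    apply ev_fvar_inv in Hs as [[]|[[Q [f' [_ [E _]]]]|[Q [_ [E _]]]]]; auto; discriminate.
  - intros a X Z Ha Hs. apply (soup_step_perm _ _ _ _ H1) in Hs.
    apply ev_fvar_inv in Hs as [Hl|[[Q [f' [Ef [E HZ]]]]|[Q [Ef [E HZ]]]]]; auto;
      [contradict_label Ha| |]; injection E as E1 _; subst a f.
    + eapply soup_rel_match_in; [apply soup_reach_refl; exact H2|apply ev_suc_in; auto|].
      right; left. exists f', p, q, m. auto.
    + eapply soup_rel_match_in; [apply soup_reach_refl; exact H2|apply ev_zero_in; auto|].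
      right; right; left. exists p, q, m. split; [exact GS|split; left; auto].
Qed.

Lemma soup_rel_choice_tau t p s q m Z Y : related_stacks (t :: p) (s :: q) m ->
  cont_class (s :: q) m Y ->
  Permutation Z (enter_soup1 t p m) \/ Permutation Z (skip_soup1 t p m) ->
  exists N', soup_star Y N' /\ perm_closure soup_rel Z N'.
Proof.
  intros GS HY HZ. destruct (related_stacks_cons _ _ _ _ _ GS) as [Gts GS'].
  pose proof Gts as [Wt [Ws _]]. pose proof GS' as [_ [Wp [Wq _]]].
  assert (Hreach : soup_reach Y (cont_soup5 s q m)) by (eapply cont_class_reach_choice; eauto).
  destruct HZ as [HZ|HZ].
  - apply soup_rel_match_tau with (enter_soup1 s q m).
    + eapply soup_reach_trans; [exact Hreach|]. apply soup_reach_tau, cont_soup5_tau_enter; auto.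
    + right; right; right; left. exists t, p, s, q, m.
      split; [exact Gts|split; [auto|split; [auto|split; left; auto]]].
  - apply soup_rel_match_tau with (skip_soup1 s q m).
    + eapply soup_reach_trans; [exact Hreach|]. apply soup_reach_tau, cont_soup5_tau_skip; auto.
    + right; right; right; right; left. exists t, p, s, q, m.
      split; [exact GS'|split; [auto|split; [auto|split; left; auto]]].
Qed.

Lemma soup_rel_cont_simulates p q m M N : related_stacks p q m ->
  cont_class p m M -> cont_class q m N -> soup_simulates soup_rel M N.
Proof.
  intros GS H1 H2. pose proof GS as [HF [Wp [Wq Fpq]]].
  split; [eapply silent_cont_class; eauto|split].
  - intros Z Hs. destruct (cont_class_tau _ _ _ _ Wp H1 Hs) as [HZ|[t [p' [Ep [HM HZ]]]]].
    + apply soup_rel_match_tau with N; [apply soup_reach_refl; auto|].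
      right; right; left. exists p, q, m. auto.
    + subst p. inversion HF as [|? s ? q' Rts HF']; subst. eapply soup_rel_choice_tau; eauto.
  - intros a X Z Ha Hs. destruct (cont_class_in _ _ _ _ _ _ Wp H1 Ha Hs) as [Ep [Ea [HM HZ]]].
    subst p a. inversion HF; subst.
    eapply soup_rel_match_in; [apply cont_class_reach_done; eauto|apply done_soup_in|].
    right; right; right; right; right. exists m; split; auto.
Qed.

Lemma soup_rel_enter_simulates t p s q m M N : related_terms t s m -> wf_stack p -> wf_stack q ->
  enter_class t p m M -> enter_class s q m N -> soup_simulates soup_rel M N.
Proof.
  intros G Wp Wq H1 H2. pose proof G as [Wt [Ws _]].
  split; [eapply silent_enter_class; eauto|split].
  - intros Z Hs. apply soup_rel_match_tau with N; [apply soup_reach_refl; auto|].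
    right; right; right; left. exists t, p, s, q, m.
    split; [exact G|split; [auto|split; [auto|split; [eapply enter_class_tau; eauto|auto]]]].
  - intros a X Z Ha Hs.
    destruct (enter_class_in _ _ _ _ _ _ _ Wt Wp H1 Ha Hs) as [Ea [HM HZ]]. subst a.
    eapply soup_rel_match_in; [eapply enter_class_reach; eauto|apply enter_soup2_in; auto|].
    left. exists t, s, m. split; auto. split; right; right; eauto.
Qed.

Lemma soup_rel_skip_simulates t p s q m M N : related_stacks p q m -> wf_at 0 t -> wf_at 0 s ->
  skip_class t p m M -> skip_class s q m N -> soup_simulates soup_rel M N.
Proof.
  intros GS Wt Ws H1 H2. pose proof GS as [HF [Wp [Wq Fpq]]].
  split; [eapply silent_skip_class; eauto|split].
  - intros Z Hs. apply soup_rel_match_tau with N; [apply soup_reach_refl; auto|].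
    right; right; right; right; left. exists t, p, s, q, m.
    split; [exact GS|split; [auto|split; [auto|split; [eapply skip_class_tau; eauto|auto]]]].
  - intros a X Z Ha Hs.
    destruct (skip_class_in _ _ _ _ _ _ _ Wt Wp H1 Ha Hs) as [Ea [HM HZ]]. subst a.
    eapply soup_rel_match_in; [eapply skip_class_reach; eauto|apply skip_soup2_in; auto|].
    right; right; left. exists p, q, m. split; [exact GS|split; left; auto].
Qed.

Lemma soup_rel_inert_simulates m M N : Permutation M (inert_soup m) ->
  Permutation N (inert_soup m) -> soup_simulates soup_rel M N.
Proof.
  intros H1 H2. split; [eapply silent_perm; [apply Permutation_sym; exact H1|solve_silent]|split].
  - intros Z Hs. apply (soup_step_perm _ _ _ _ H1), inert_soup_inv in Hs. destruct Hs.
  - intros a X Z Ha Hs. apply (soup_step_perm _ _ _ _ H1), inert_soup_inv in Hs. contradiction.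
Qed.

Lemma soup_rel_bisimulation : soup_bisimulation soup_rel.
Proof.
  intros M N HR. split; [apply soup_rel_sym; auto|].
  destruct HR as [H|[H|[H|[H|[H|H]]]]].
  - destruct H as [t [s [m [G [H1 H2]]]]]. eapply soup_rel_eval_simulates; eauto.
  - destruct H as [f [p [q [m [GS [H1 H2]]]]]]. eapply soup_rel_fvar_simulates; eauto.
  - destruct H as [p [q [m [GS [H1 H2]]]]]. eapply soup_rel_cont_simulates; eauto.
  - destruct H as [t [p [s [q [m [G [Wp [Wq [H1 H2]]]]]]]]].
    exact (soup_rel_enter_simulates t p s q m M N G Wp Wq H1 H2).
  - destruct H as [t [p [s [q [m [GS [Wt [Ws [H1 H2]]]]]]]]].
    exact (soup_rel_skip_simulates t p s q m M N GS Wt Ws H1 H2).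
  - destruct H as [m [H1 H2]]. eapply soup_rel_inert_simulates; eauto.
Qed.

End Completeness.

Lemma flatten_tr_ev t n : wf_at 0 t -> Permutation (flatten (tr_ev t [] n)) (ev_soup t [] n).
Proof.
  intros W. unfold tr_ev. cbn [flatten]. rewrite tr_term_flatten, flatten_Rec by auto.
  apply Permutation_refl.
Qed.

Lemma nf_bisimilar_tr_ev_barbed t s n : well_formed t -> well_formed s ->
  fv_below (fv t ++ fv s) n -> nf_bisimilar t s ->
  barbed_bisimilar H_names (tr_ev t [] n) (tr_ev s [] n).
Proof.
  intros Wt Ws F [Rel [Hb HR]].
  apply (soup_bisimulation_barbed (soup_rel Rel) (soup_rel_bisimulation Rel Hb)
           (ev_soup t [] n) (ev_soup s [] n)); try apply flatten_tr_ev; auto.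
  left. exists t, s, n. repeat split; auto; apply eval_class_start.
Qed.

(** * Soundness *)

Lemma notH_lambda : ~ In n_lambda H_names. Proof. cbv; intuition discriminate. Qed.
Lemma notH_suc : ~ In n_suc H_names. Proof. cbv; intuition discriminate. Qed.
Lemma notH_z : ~ In n_z H_names. Proof. cbv; intuition discriminate. Qed.
Lemma notH_done : ~ In n_done H_names. Proof. cbv; intuition discriminate. Qed.
Lemma notH_enter : ~ In n_enter H_names. Proof. cbv; intuition discriminate. Qed.
Lemma notH_skip : ~ In n_skip H_names. Proof. cbv; intuition discriminate. Qed.

Lemma bisimilar_flag P Q M Y a Z : bb P Q -> Permutation (flatten P) M -> soup_reach M Y ->
  (exists Z', soup_step Y (LIn a PNil) Z' /\ Permutation Z' Z) -> ~ In a H_names -> silent Z ->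
  exists P2 Q2 N1 N2 N3, Permutation (flatten P2) Z /\ bb P2 Q2 /\ soup_star (flatten Q) N1 /\
    soup_step N1 (LIn a PNil) N2 /\ soup_star N2 N3 /\ Permutation (flatten Q2) N3.
Proof.
  intros Hb HP Hreach [Z' [HY HZ']] Ha Hsil.
  destruct (lift_soup_reach _ _ _ HP Hreach) as [P1 [H1 H2]].
  destruct (bb_tau_star _ _ _ Hb H1) as [Q1 [H3 H4]].
  destruct (tau_star_soup_star _ _ (flatten Q) H3 (Permutation_refl _)) as [N1 [H5 H6]].
  apply (soup_step_perm _ (flatten P1)) in HY; [|apply Permutation_sym; auto].
  destruct (bisimilar_input _ _ _ _ _ H4 (Permutation_refl _) HY Ha) as
      [P2 [Q2 [M1 [M2 [M3 [HP2 [Hb2 [HM1 [HM2 [HM3 HQ2]]]]]]]]]].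
  { eapply silent_perm; [apply Permutation_sym; exact HZ'|exact Hsil]. }
  destruct (soup_star_perm _ _ _ H6 HM1) as [M1' [HM1' HMM]].
  exists P2, Q2, M1', M2, M3. repeat split; auto.
  - eapply Permutation_trans; eauto.
  - eapply soup_star_trans; eauto.
  - eapply soup_step_perm; eauto.
Qed.

Definition tr_bisim (t s : term) : Prop :=
  wf_at 0 t /\ wf_at 0 s /\ exists m P Q, fv_below (fv t ++ fv s) m /\ bb P Q /\
    eval_class t m (flatten P) /\ eval_class s m (flatten Q).

Lemma tr_bisim_sym t s : tr_bisim t s -> tr_bisim s t.
Proof.
  intros [Wt [Ws [m [P [Q [F [Hb [HP HQ]]]]]]]]. split; auto. split; auto.
  exists m, Q, P. split; [apply fv_below_app_comm; auto|split; [apply bb_sym; auto|auto]].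
Qed.

Section Stacks.

Variables (m : nat) (P Q : proc) (sg : stack).
Hypotheses (Hb : bb P Q) (Wsg : wf_stack sg) (HQ : stack_class sg m (flatten Q)).

Lemma stack_bisimilar_nil : Permutation (flatten P) (cont_soup0 [] m) -> sg = [].
Proof.
  intros HP.
  destruct (bisimilar_flag P Q _ (done_soup m) n_done (inert_soup m) Hb HP) as
      [P2 [Q2 [N1 [N2 [N3 [_ [_ [HN1 [HN2 _]]]]]]]]].
  - apply cont_class_reach_done. left; apply Permutation_refl.
  - apply done_soup_in.
  - exact notH_done.
  - solve_silent.
  - destruct (stack_class_in _ _ _ _ _ _ Wsg (stack_class_soup_star _ _ _ _ Wsg HQ HN1)
      notH_done HN2) as [[-> _]|[[s [q [_ [E _]]]]|[s [q [_ [E _]]]]]]; auto; discriminate.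
Qed.

Lemma stack_bisimilar_head t p : wf_at 0 t -> wf_stack p ->
  Permutation (flatten P) (cont_soup0 (t :: p) m) ->
  exists s sg', sg = s :: sg' /\
    exists P2 Q2, bb P2 Q2 /\ eval_class t m (flatten P2) /\ eval_class s m (flatten Q2).
Proof.
  intros Wt Wp HP.
  destruct (bisimilar_flag P Q _ (enter_soup2 t p m) n_enter (enter_soup3 t p m) Hb HP) as
      [P2 [Q2 [N1 [N2 [N3 [HP2 [Hb2 [HN1 [HN2 [HN3 HQ2]]]]]]]]]].
  - eapply soup_reach_trans; [apply (cont_class_reach_choice t p m); auto; left; auto|].
    eapply soup_reach_trans; [apply soup_reach_tau, cont_soup5_tau_enter; auto|].
    apply soup_reach_tau, enter_soup1_tau; auto.
  - apply enter_soup2_in; auto.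
  - exact notH_enter.
  - solve_silent.
  - destruct (stack_class_in _ _ _ _ _ _ Wsg (stack_class_soup_star _ _ _ _ Wsg HQ HN1)
      notH_enter HN2) as [[_ E]|[[s [sg' [Esg [_ HZ]]]]|[s [q [_ [E _]]]]]]; try discriminate.
    subst sg. inversion Wsg as [|? ? Ws Wsg']; subst.
    exists s, sg'. split; auto. exists P2, Q2. split; auto. split.
    + right; right. exists p; auto.
    + eapply eval_class_perm; [apply Permutation_sym; exact HQ2|].
      eapply eval_class_soup_star; [exact Ws| |exact HN3]. right; right. exists sg'; auto.
Qed.

Lemma stack_bisimilar_tail t p s sg' : wf_at 0 t -> wf_stack p -> sg = s :: sg' ->
  Permutation (flatten P) (cont_soup0 (t :: p) m) ->
  exists P2 Q2, bb P2 Q2 /\ Permutation (flatten P2) (cont_soup0 p m) /\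
    stack_class sg' m (flatten Q2).
Proof.
  intros Wt Wp Esg HP.
  destruct (bisimilar_flag P Q _ (skip_soup2 p m) n_skip (cont_soup0 p m) Hb HP) as
      [P2 [Q2 [N1 [N2 [N3 [HP2 [Hb2 [HN1 [HN2 [HN3 HQ2]]]]]]]]]].
  - eapply soup_reach_trans; [apply (cont_class_reach_choice t p m); auto; left; auto|].
    eapply soup_reach_trans; [apply soup_reach_tau, cont_soup5_tau_skip; auto|].
    apply soup_reach_tau, skip_soup1_tau; auto.
  - apply skip_soup2_in; auto.
  - exact notH_skip.
  - solve_silent.
  - destruct (stack_class_in _ _ _ _ _ _ Wsg (stack_class_soup_star _ _ _ _ Wsg HQ HN1)
      notH_skip HN2) as [[_ E]|[[s1 [q [_ [E _]]]]|[s1 [q [Esg' [_ HZ]]]]]]; try discriminate.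
    rewrite Esg in Esg', Wsg. injection Esg' as <- <-. inversion Wsg; subst.
    exists P2, Q2. repeat split; auto.
    eapply stack_class_perm; [apply Permutation_sym; exact HQ2|].
    apply (stack_class_soup_star _ _ N2); auto. left; left; auto.
Qed.

End Stacks.

Lemma stack_tr_bisim m pi : forall sg P Q, wf_stack pi -> wf_stack sg ->
  fv_below (flat_map fv pi ++ flat_map fv sg) m -> bb P Q ->
  Permutation (flatten P) (cont_soup0 pi m) -> stack_class sg m (flatten Q) ->
  Forall2 tr_bisim pi sg.
Proof.
  induction pi as [|t pi IH]; intros sg P Q Wp Wsg F Hb HP HQ.
  - rewrite (stack_bisimilar_nil m P Q sg); auto.
  - inversion Wp as [|? ? Wt Wp']; subst.
    destruct (stack_bisimilar_head m P Q sg Hb Wsg HQ t pi)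
      as [s [sg' [-> [P2 [Q2 [Hb2 [HP2 HQ2]]]]]]]; auto.
    destruct (stack_bisimilar_tail m P Q (s :: sg') Hb Wsg HQ t pi s sg')
      as [P3 [Q3 [Hb3 [HP3 HQ3]]]]; auto.
    inversion Wsg as [|? ? Ws Wsg']; subst.
    constructor.
    + split; auto. split; auto. exists m, P2, Q2. split; auto.
      eapply fv_below_incl; [|exact F]. intros f Hf; simpl; rewrite !in_app_iff in *; tauto.
    + apply (IH sg' P3 Q3); auto.
      eapply fv_below_incl; [|exact F]. intros f Hf; simpl; rewrite !in_app_iff in *; tauto.
Qed.

(* The head variable [g] is read off its unary encoding one [suc] at a time. *)
Lemma num_tr_bisim m g : forall g' pi sg P Q, wf_stack pi -> wf_stack sg ->
  fv_below (flat_map fv pi ++ flat_map fv sg) m -> bb P Q ->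
  Permutation (flatten P) (ev_soup (FVar g) pi m) ->
  Permutation (flatten Q) (ev_soup (FVar g') sg m) ->
  g = g' /\ Forall2 tr_bisim pi sg.
Proof.
  induction g as [|g IH]; intros g' pi sg P Q Wp Wsg F Hb HP HQ.
  - destruct (bisimilar_flag P Q _ _ n_z (cont_soup0 pi m) Hb HP
      (soup_reach_refl _ _ (Permutation_refl _)) (ev_zero_in pi m PNil Wp) notH_z) as
        [P2 [Q2 [N1 [N2 [N3 [HP2 [Hb2 [HN1 [HN2 [HN3 HQ2]]]]]]]]]]; [solve_silent|].
    apply (soup_step_perm _ _ _ _ (ev_fvar_soup_star _ _ _ _ _ Wsg HQ HN1)) in HN2.
    apply ev_fvar_inv in HN2 as [Hl|[[Q' [f' [Ef [E HZ]]]]|[Q' [Ef [E HZ]]]]]; auto;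
      [exfalso; apply notH_z; exact Hl|discriminate|].
    subst g'. split; auto. apply (stack_tr_bisim m pi sg P2 Q2); auto.
    eapply stack_class_perm; [apply Permutation_sym; exact HQ2|].
    apply (stack_class_soup_star _ _ N2); auto. left; left; auto.
  - destruct (bisimilar_flag P Q _ _ n_suc (ev_soup (FVar g) pi m) Hb HP
      (soup_reach_refl _ _ (Permutation_refl _)) (ev_suc_in g pi m PNil Wp) notH_suc) as
        [P2 [Q2 [N1 [N2 [N3 [HP2 [Hb2 [HN1 [HN2 [HN3 HQ2]]]]]]]]]]; [solve_silent|].
    apply (soup_step_perm _ _ _ _ (ev_fvar_soup_star _ _ _ _ _ Wsg HQ HN1)) in HN2.
    apply ev_fvar_inv in HN2 as [Hl|[[Q' [f' [Ef [E HZ]]]]|[Q' [Ef [E HZ]]]]]; auto;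
      [exfalso; apply notH_suc; exact Hl| |discriminate].
    subst g'. destruct (IH f' pi sg P2 Q2) as [-> HF]; auto.
    eapply Permutation_trans; [exact HQ2|]. eapply ev_fvar_soup_star; eauto.
Qed.

Lemma tr_bisim_lam t s u : tr_bisim t s -> kam_star (t, []) (Lam u, []) ->
  exists s' m, kam_star (s, []) (Lam s', []) /\ ~ In m (fv u) /\ ~ In m (fv s') /\
    tr_bisim (open u (FVar m)) (open s' (FVar m)).
Proof.
  intros [Wt [Ws [m [P [Q [F [Hb [HP HQ]]]]]]]] Hk.
  destruct (kam_star_wf_init _ _ _ Wt Hk) as [Wu _]. simpl in Wu.
  destruct (bisimilar_flag P Q (flatten P) (restart_soup2 u m) n_lambda (restart_soup3 u m) Hb
      (Permutation_refl _)) as [P2 [Q2 [N1 [N2 [N3 [HP2 [Hb2 [HN1 [HN2 [HN3 HQ2]]]]]]]]]].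
  - exact (eval_class_reach_lam t m (flatten P) u Wt HP Hk).
  - apply restart_soup2_in; auto.
  - exact notH_lambda.
  - solve_silent.
  - assert (HC1 : eval_class s m N1) by (eapply eval_class_soup_star; eauto).
    destruct (eval_class_in _ _ _ _ _ _ Ws HC1 notH_lambda HN2) as
        [[_ [s' [Hk' [_ HZ]]]]|[f [pi [_ [_ [[f' [_ [E _]]]|[_ [E _]]]]]]]]; try discriminate.
    destruct (kam_star_wf_init _ _ _ Ws Hk') as [Ws' _]. simpl in Ws'.
    pose proof (fv_below_kam_star_lam _ _ _ Hk (fv_below_app_l _ _ _ F)) as Fu.
    pose proof (fv_below_kam_star_lam _ _ _ Hk' (fv_below_app_r _ _ _ F)) as Fu'.
    exists s', m. split; [auto|split; [apply fv_below_notin; auto|split]].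
    { apply fv_below_notin; auto. }
    split; [apply wf_open; simpl; auto|split; [apply wf_open; simpl; auto|]].
    exists (S m), P2, Q2. split; [apply fv_below_app; apply fv_below_open_fresh; auto|].
    split; auto. split.
    + right; left. exists u, m. repeat split; auto.
    + eapply eval_class_perm; [apply Permutation_sym; exact HQ2|].
      eapply eval_class_soup_star; [apply wf_open; simpl; auto| |exact HN3].
      right; left. exists s', m. repeat split; auto.
Qed.

Section FreeVariable.

Variables (t s : term) (m : nat) (P Q : proc) (pi : stack).
Hypotheses (Wt : wf_at 0 t) (Ws : wf_at 0 s) (F : fv_below (fv t ++ fv s) m) (Hb : bb P Q)
  (HP : eval_class t m (flatten P)) (HQ : eval_class s m (flatten Q)).

Lemma tr_bisim_fvar_zero : kam_star (t, []) (FVar 0, pi) ->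
  exists sg, kam_star (s, []) (FVar 0, sg) /\ Forall2 tr_bisim pi sg.
Proof.
  intros Hk. destruct (kam_star_wf_init _ _ _ Wt Hk) as [_ Wp].
  destruct (bisimilar_flag P Q (flatten P) _ n_z (cont_soup0 pi m) Hb (Permutation_refl _)
      (eval_class_reach_fvar _ _ _ _ _ Wt HP Hk) (ev_zero_in pi m PNil Wp) notH_z) as
      [P2 [Q2 [N1 [N2 [N3 [HP2 [Hb2 [HN1 [HN2 [HN3 HQ2]]]]]]]]]]; [solve_silent|].
  assert (HC1 : eval_class s m N1) by (eapply eval_class_soup_star; eauto).
  destruct (eval_class_in _ _ _ _ _ _ Ws HC1 notH_z HN2) as
      [[E _]|[f [sg [Hk' [_ [[f' [_ [E _]]]|[Ef [_ HZ]]]]]]]]; try discriminate.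
  subst f. exists sg. split; auto.
  destruct (kam_star_wf_init _ _ _ Ws Hk') as [_ Wsg].
  apply (stack_tr_bisim m pi sg P2 Q2); auto.
  - apply fv_below_app.
    + eapply fv_below_kam_star_fvar; [exact Hk|eapply fv_below_app_l; eauto].
    + eapply fv_below_kam_star_fvar; [exact Hk'|eapply fv_below_app_r; eauto].
  - eapply stack_class_perm; [apply Permutation_sym; exact HQ2|].
    apply (stack_class_soup_star _ _ N2); auto. left; left; auto.
Qed.

Lemma tr_bisim_fvar_suc g : kam_star (t, []) (FVar (S g), pi) ->
  exists sg, kam_star (s, []) (FVar (S g), sg) /\ Forall2 tr_bisim pi sg.
Proof.
  intros Hk. destruct (kam_star_wf_init _ _ _ Wt Hk) as [_ Wp].
  destruct (bisimilar_flag P Q (flatten P) _ n_suc (ev_soup (FVar g) pi m) Hb (Permutation_refl _)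
      (eval_class_reach_fvar _ _ _ _ _ Wt HP Hk) (ev_suc_in g pi m PNil Wp) notH_suc) as
      [P2 [Q2 [N1 [N2 [N3 [HP2 [Hb2 [HN1 [HN2 [HN3 HQ2]]]]]]]]]]; [solve_silent|].
  assert (HC1 : eval_class s m N1) by (eapply eval_class_soup_star; eauto).
  destruct (eval_class_in _ _ _ _ _ _ Ws HC1 notH_suc HN2) as
      [[E _]|[f [sg [Hk' [_ [[f' [Ef [_ HZ]]]|[_ [E _]]]]]]]]; try discriminate.
  subst f. destruct (kam_star_wf_init _ _ _ Ws Hk') as [_ Wsg].
  destruct (num_tr_bisim m g f' pi sg P2 Q2) as [-> HF]; auto.
  - apply fv_below_app.
    + eapply fv_below_kam_star_fvar; [exact Hk|eapply fv_below_app_l; eauto].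
    + eapply fv_below_kam_star_fvar; [exact Hk'|eapply fv_below_app_r; eauto].
  - eapply Permutation_trans; [exact HQ2|]. eapply ev_fvar_soup_star; eauto.
  - exists sg; split; auto.
Qed.

End FreeVariable.

Lemma tr_bisim_fvar t s f pi : tr_bisim t s -> kam_star (t, []) (FVar f, pi) ->
  exists sg, kam_star (s, []) (FVar f, sg) /\ Forall2 tr_bisim pi sg.
Proof.
  intros [Wt [Ws [m [P [Q [F [Hb [HP HQ]]]]]]]] Hk.
  destruct f as [|g]; [apply (tr_bisim_fvar_zero t s m P Q)|apply (tr_bisim_fvar_suc t s m P Q)];
    auto.
Qed.

(* Clause (1) of normal-form bisimulation quantifies over every fresh
   variable, whereas the encoding always restarts a lambda on its counter;
   closing [tr_bisim] under bijective renamings of free variables bridges the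
   gap. *)
Definition tr_bisim_ren (a b : term) : Prop :=
  exists g g' t s, (forall x, g' (g x) = x) /\ (forall x, g (g' x) = x) /\ tr_bisim t s /\
    a = ren g t /\ b = ren g s.

Lemma tr_bisim_ren_sym a b : tr_bisim_ren a b -> tr_bisim_ren b a.
Proof.
  intros [g [g' [t [s [H1 [H2 [H3 [-> ->]]]]]]]]. exists g, g', s, t.
  split; [auto|split; [auto|split; [apply tr_bisim_sym; auto|auto]]].
Qed.

Section Renaming.

Variables (g g' : nat -> nat) (t s : term).
Hypotheses (Hgg : forall x, g' (g x) = x) (Hgg' : forall x, g (g' x) = x) (HS : tr_bisim t s).

Lemma tr_bisim_ren_lam t' : kam_star (ren g t, []) (Lam t', []) ->
  exists s', kam_star (ren g s, []) (Lam s', []) /\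
    forall f, ~ In f (fv t') -> ~ In f (fv s') ->
      tr_bisim_ren (open t' (FVar f)) (open s' (FVar f)).
Proof.
  intros Hk. apply (kam_star_ren g') in Hk. simpl in Hk. rewrite ren_inv in Hk by auto.
  destruct (tr_bisim_lam _ _ _ HS Hk) as [s0 [m [Hk' [Hm1 [Hm2 HS']]]]].
  exists (ren g s0). split; [apply (kam_star_ren g) in Hk'; exact Hk'|].
  intros f Hf1 Hf2.
  assert (Hgm1 : ~ In (g m) (fv t')).
  { intro Hx. apply Hm1. rewrite fv_ren, <- (Hgg m). apply in_map; auto. }
  assert (Hgm2 : ~ In (g m) (fv (ren g s0))).
  { intro Hx. apply Hm2. rewrite fv_ren in Hx. apply in_map_iff in Hx as [y [Ey Hy]].
    rewrite <- (Hgg y), Ey, Hgg in Hy. auto. }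
  exists (fun x => swap f (g m) (g x)), (fun x => g' (swap f (g m) x)),
    (open (ren g' t') (FVar m)), (open s0 (FVar m)).
  split; [intros x; rewrite swap_involutive; auto|].
  split; [intros x; rewrite Hgg', swap_involutive; auto|].
  split; auto. unfold open. rewrite !ren_open. simpl. rewrite swap_r, ren_comp.
  split; f_equal.
  - rewrite <- (ren_comp (swap f (g m)) (fun x => g (g' x))).
    rewrite (ren_ext (fun x => g (g' x)) (fun x => x)), ren_id by auto.
    symmetry; apply ren_swap_fresh; auto.
  - rewrite <- (ren_comp (swap f (g m)) g). symmetry; apply ren_swap_fresh; auto.
Qed.

Lemma tr_bisim_ren_fvar f pi : kam_star (ren g t, []) (FVar f, pi) ->
  exists pi', kam_star (ren g s, []) (FVar f, pi') /\ Forall2 tr_bisim_ren pi pi'.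
Proof.
  intros Hk. apply (kam_star_ren g') in Hk. simpl in Hk. rewrite ren_inv in Hk by auto.
  destruct (tr_bisim_fvar _ _ _ _ HS Hk) as [sg [Hk' HF]].
  exists (map (ren g) sg). split.
  - apply (kam_star_ren g) in Hk'. simpl in Hk'. rewrite Hgg' in Hk'. exact Hk'.
  - clear -Hgg Hgg' HF. revert sg HF. induction pi; intros sg H; inversion H; subst; simpl;
      constructor; auto.
    exists g, g', (ren g' a), y. split; [auto|split; [auto|split; [auto|split; auto]]].
    rewrite (ren_inv g' g); auto.
Qed.

End Renaming.

Lemma tr_bisim_ren_nf_bisimulation : nf_bisimulation tr_bisim_ren.
Proof.
  split; [exact tr_bisim_ren_sym|].
  intros a b [g [g' [t [s [Hgg [Hgg' [HS [-> ->]]]]]]]]. split.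
  - exact (tr_bisim_ren_lam g g' t s Hgg Hgg' HS).
  - exact (tr_bisim_ren_fvar g g' t s Hgg Hgg' HS).
Qed.

Lemma tr_ev_barbed_nf_bisimilar t s n : well_formed t -> well_formed s ->
  fv_below (fv t ++ fv s) n -> barbed_bisimilar H_names (tr_ev t [] n) (tr_ev s [] n) ->
  nf_bisimilar t s.
Proof.
  intros Wt Ws F Hb. exists tr_bisim_ren. split; [apply tr_bisim_ren_nf_bisimulation|].
  exists (fun x => x), (fun x => x), t, s. rewrite !ren_id. repeat split; auto.
  exists n, (tr_ev t [] n), (tr_ev s [] n). repeat split; auto;
    (eapply eval_class_perm; [apply Permutation_sym, flatten_tr_ev; auto|apply eval_class_start]).
Qed.

Theorem corollary4p15 (t s : term) :
  well_formed t -> well_formed s ->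
  (nf_bisimilar t s <->
   exists n : nat,
     (forall f, In f (fv t) \/ In f (fv s) -> f < n) /\
     barbed_bisimilar H_names (tr_ev t [] n) (tr_ev s [] n)).
Proof.
  intros Wt Ws.
  assert (Hfv : forall n, fv_below (fv t ++ fv s) n <->
                          (forall f, In f (fv t) \/ In f (fv s) -> f < n))
    by (intros n; unfold fv_below; setoid_rewrite in_app_iff; tauto).
  split.
  - intros Hnf. exists (S (list_max (fv t ++ fv s))).
    pose proof (fv_below_list_max (fv t ++ fv s)) as F.
    split; [apply Hfv; exact F|]. apply nf_bisimilar_tr_ev_barbed; auto.
  - intros [n [F Hb]]. apply (tr_ev_barbed_nf_bisimilar t s n); auto. apply Hfv; exact F.
Qed.
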